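(* Let $\beta>0$ and let $M_\beta$ be the flat Möbius strip of width $2\beta$ with flat metric $g_{flat}$. Let $g=\phi^2 g_{flat}$ be a Riemannian metric on $M_\beta$ ($\phi$ smooth and positive) which is $H_\beta$-invariant. Then the (continuous) metric $P_{\phi_\beta}(\phi)^2 g_{flat}$ satisfies $$\mathrm{area}(M_\beta,\phi^2 g_{flat})=\mathrm{area}(M_\beta,P_{\phi_\beta}(\phi)^2 g_{flat})+\|\phi-P_{\phi_\beta}(\phi)\|_{L^2}^2,\qquad \mathrm{sys}(M_\beta,\phi^2 g_{flat})\le \mathrm{sys}(M_\beta,P_{\phi_\beta}(\phi)^2 g_{flat}).$$
   Context: Let $S_\beta=\mathbb{R}\times[-\beta,\beta]\subset\mathbb{R}^2$ with the Euclidean metric, let $A(x,y)=(x+\pi,-y)$ and let $M_\beta=S_\beta/\{A^k:k\in\mathbb{Z}\}$ with the induced flat metric $g_{flat}$ (so that the quotient map $p:S_\beta\to M_\beta$ is a local isometry); functions on $M_\beta$ are identified with $A$-invariant functions on $S_\beta$. $H_\beta=\mathrm{Isom}(M_\beta,g_{flat})$ consists of the maps induced by the translations $(x,y)\mapsto(x+h,y)$, $h\in\mathbb{R}$; a function (or conformal metric) is $H_\beta$-invariant iff $\phi$ is independent of $x$ (it is then even in $y$). Let $\phi_0(y)=\frac{2e^y}{1+e^{2y}}$, $\beta_1=\log(2+\sqrt3)$, and $\phi_\beta(p(x,y))=\max\{\phi_0(y),\tfrac12\}$ (equal to $\phi_0(y)$ for $|y|\le\beta_1$ and $\tfrac12$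 for $|y|>\beta_1$), a continuous positive function. $P_{\phi_\beta}:L^2(M_\beta,g_{flat})\to L^2(M_\beta,g_{flat})$, $P_{\phi_\beta}(\phi)=\frac{(\phi,\phi_\beta)_{L^2}}{(\phi_\beta,\phi_\beta)_{L^2}}\phi_\beta$, is the orthogonal projection onto $\mathbb{R}\phi_\beta$, with $L^2$ taken with respect to $g_{flat}$. For a (possibly only continuous) conformal metric $\psi^2 g_{flat}$, the length of a curve $\gamma$ is $\int\psi(\gamma)|\gamma'|_{g_{flat}}dt$, the area is $\int\psi^2\,d\mathrm{vol}_{g_{flat}}$, and the systole $\mathrm{sys}$ is the infimum of lengths of noncontractible closed curves. *)

From Stdlib Require Import Reals Lra.
From Coquelicot Require Import Coquelicot.
Open Scope R_scope.

(* A function on M_beta is represented by an A-invariant function on the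
   strip S_beta = R x [-beta,beta], given as f : R -> R -> R (f x y). *)

Fixpoint Ck2 (k : nat) (f : R -> R -> R) : Prop :=
  match k with
  | O => forall x y, continuous (fun p : R * R => f (fst p) (snd p)) (x, y)
  | S k' =>
      (forall x y, continuous (fun p : R * R => f (fst p) (snd p)) (x, y)) /\
      (forall x y, ex_derive (fun u => f u y) x) /\
      (forall x y, ex_derive (fun v => f x v) y) /\
      Ck2 k' (fun x y => Derive (fun u => f u y) x) /\
      Ck2 k' (fun x y => Derive (fun v => f x v) y)
  end.

Definition smooth2 (f : R -> R -> R) : Prop := forall k, Ck2 k f.

(* The deck transformation A(x,y) = (x+pi,-y) and its powers. *)
Definition Apow (k : Z) (p : R * R) : R * R :=
  (fst p + IZR k * PI, powerRZ (-1) k * snd p).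

Definition phi0 (y : R) : R := 2 * exp y / (1 + exp (2 * y)).
Definition phib (x y : R) : R := Rmax (phi0 y) (1 / 2).

(* L^2 inner product on (M_beta, g_flat), computed on the fundamental
   domain [0,pi] x [-beta,beta]. *)
Definition L2ip (beta : R) (f g : R -> R -> R) : R :=
  RInt (fun x => RInt (fun y => f x y * g x y) (- beta) beta) 0 PI.

Definition L2norm2 (beta : R) (f : R -> R -> R) : R := L2ip beta f f.

Definition Pphib (beta : R) (f : R -> R -> R) : R -> R -> R :=
  fun x y => (L2ip beta f phib / L2ip beta phib phib) * phib x y.

Definition area (beta : R) (psi : R -> R -> R) : R :=
  RInt (fun x => RInt (fun y => (psi x y) ^ 2) (- beta) beta) 0 PI.

Definition C1_path_in_strip (beta : R) (g1 g2 : R -> R) : Prop :=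
  (forall t, 0 <= t <= 1 -> ex_derive g1 t /\ ex_derive g2 t) /\
  (forall t, 0 <= t <= 1 -> continuous (Derive g1) t /\ continuous (Derive g2) t) /\
  (forall t, 0 <= t <= 1 -> - beta <= g2 t <= beta).

(* Lift to S_beta of a noncontractible closed curve of M_beta:
   the endpoint is A^k of the start point with k <> 0. *)
Definition noncontractible_loop_lift (beta : R) (g1 g2 : R -> R) : Prop :=
  C1_path_in_strip beta g1 g2 /\
  exists k : Z, k <> 0%Z /\ (g1 1, g2 1) = Apow k (g1 0, g2 0).

Definition curve_length (psi : R -> R -> R) (g1 g2 : R -> R) : R :=
  RInt (fun t => psi (g1 t) (g2 t) *
                 sqrt ((Derive g1 t) ^ 2 + (Derive g2 t) ^ 2)) 0 1.

Definition sys (beta : R) (psi : R -> R -> R) : Rbar :=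
  Glb_Rbar (fun L => exists g1 g2 : R -> R,
               noncontractible_loop_lift beta g1 g2 /\ L = curve_length psi g1 g2).

From Stdlib Require Import Reals Lra Psatz ZArith FunctionalExtensionality.
From Coquelicot Require Import Coquelicot.
Open Scope R_scope.

(* Both [phi] and [phib] depend on [y] only, and [Pphib beta phi = c * phib] with
   [c = <phi, phib> / <phib, phib>]; the area identity is Pythagoras for this
   orthogonal projection.  Every noncontractible loop has [phib]-length at least
   [PI]: [phib >= phi0], the round metric of the unit sphere in Mercator
   coordinates, and a loop of odd degree joins antipodal points, while a loop of
   even degree winds twice around and [phib >= 1/2].  Hence
   [sys (c * phib) >= c PI].  Conversely, let all [phi]-loops have length at
   least [r].  Averaging the [phi]-lengths of the half great circles through
   [(0, 0)] gives [r phi0^2 <= PI phi phi0] in the mean over the band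
   [|y| <= beta1] where [phib = phi0], and horizontal loops give
   [r / 4 <= PI phi / 2] pointwise where [phib = 1/2]; summing,
   [r <phib, phib> <= PI <phi, phib>], i.e. [sys phi <= c PI]. *)

(** * Continuity and Riemann integrals *)

Lemma continuous_of_ex_derive (f : R -> R) x : ex_derive f x -> continuous f x.
Proof. apply (ex_derive_continuous (K := R_AbsRing) (V := R_NormedModule)). Qed.

Lemma continuous_pow n x : continuous (fun y => y ^ n) x.
Proof. apply continuous_of_ex_derive; auto_derive; auto. Qed.

Lemma Rmax_abs a b : Rmax a b = (a + b + Rabs (a - b)) / 2.
Proof.
  unfold Rmax; destruct (Rle_dec a b).
  - rewrite Rabs_left1 by lra; field.
  - rewrite Rabs_pos_eq by lra; field.
Qed.

Lemma continuous_Rmax (f g : R -> R) x :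
  continuous f x -> continuous g x -> continuous (fun t => Rmax (f t) (g t)) x.
Proof.
  intros Hf Hg.
  apply (continuous_ext (fun t => (f t + g t + Rabs (f t - g t)) / 2)).
  { intros; symmetry; apply Rmax_abs. }
  apply (continuous_mult (fun t => f t + g t + Rabs (f t - g t)) (fun _ => / 2));
    [| apply continuous_const].
  apply (continuous_plus (fun t => f t + g t)); [apply (continuous_plus f g); auto |].
  apply (continuous_comp (fun t => f t - g t) Rabs); [apply (continuous_minus f g); auto |].
  apply continuous_Rabs.
Qed.

Lemma ex_RInt_continuous_on (f : R -> R) a b :
  a <= b -> (forall x, a <= x <= b -> continuous f x) -> ex_RInt f a b.
Proof.
  intros Hab Hf. apply (ex_RInt_continuous (V := R_CompleteNormedModule)).
  rewrite Rmin_left, Rmax_right by lra. exact Hf.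
Qed.

Lemma ex_RInt_of_continuous (f : R -> R) a b : (forall x, continuous f x) -> ex_RInt f a b.
Proof. intros Hf. apply (ex_RInt_continuous (V := R_CompleteNormedModule)). auto. Qed.

(* Coquelicot's [RInt] lemmas specialized to real integrands, with [Rplus] and
   [Rmult] in place of [plus] and [scal], so that they can be used to rewrite. *)
Lemma RInt_plus_R (f g : R -> R) a b : ex_RInt f a b -> ex_RInt g a b ->
  RInt (fun x => f x + g x) a b = RInt f a b + RInt g a b.
Proof. intros Hf Hg; exact (RInt_plus f g a b Hf Hg). Qed.

Lemma RInt_minus_R (f g : R -> R) a b : ex_RInt f a b -> ex_RInt g a b ->
  RInt (fun x => f x - g x) a b = RInt f a b - RInt g a b.
Proof. intros Hf Hg; exact (RInt_minus f g a b Hf Hg). Qed.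

Lemma RInt_scal_R (f : R -> R) k a b : ex_RInt f a b ->
  RInt (fun x => k * f x) a b = k * RInt f a b.
Proof. intros Hf; exact (RInt_scal f a b k Hf). Qed.

Lemma RInt_const_R c a b : RInt (fun _ => c) a b = (b - a) * c.
Proof. exact (RInt_const a b c). Qed.

Lemma RInt_ext_R (f g : R -> R) a b :
  (forall x, Rmin a b < x < Rmax a b -> f x = g x) -> RInt f a b = RInt g a b.
Proof. apply (RInt_ext (V := R_CompleteNormedModule)). Qed.

Lemma RInt_is_derive (F f : R -> R) a b :
  (forall x, Rmin a b <= x <= Rmax a b -> is_derive F x (f x)) ->
  (forall x, Rmin a b <= x <= Rmax a b -> continuous f x) ->
  RInt f a b = F b - F a.
Proof. intros. apply is_RInt_unique, (is_RInt_derive F f a b); auto. Qed.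

Lemma RInt_even (h : R -> R) beta : 0 < beta ->
  (forall y, - beta <= y <= beta -> continuous h y) ->
  (forall y, - beta <= y <= beta -> h (- y) = h y) ->
  RInt h (- beta) beta = 2 * RInt h 0 beta.
Proof.
  intros Hb Hc He.
  assert (ex_neg : ex_RInt h (- beta) 0)
    by (apply ex_RInt_continuous_on; [lra | intros; apply Hc; lra]).
  assert (ex_pos : ex_RInt h 0 beta)
    by (apply ex_RInt_continuous_on; [lra | intros; apply Hc; lra]).
  assert (Hswap : RInt h 0 (- beta) = - RInt h (- beta) 0)
    by (symmetry; exact (opp_RInt_swap h _ _ ex_neg)).
  assert (ex_lin : ex_RInt h (-1 * 0 + 0) (-1 * beta + 0)).
  { replace (-1 * 0 + 0) with 0 by ring; replace (-1 * beta + 0) with (- beta) by ring.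
    now apply ex_RInt_swap. }
  pose proof (RInt_comp_lin h (-1) 0 0 beta ex_lin) as Hlin.
  replace (-1 * 0 + 0) with 0 in Hlin by ring.
  replace (-1 * beta + 0) with (- beta) in Hlin by ring.
  assert (Hrefl : RInt h (- beta) 0 = RInt h 0 beta).
  { rewrite Hswap in Hlin. change (RInt (fun y => -1 * h (-1 * y + 0)) 0 beta
      = - RInt h (- beta) 0) in Hlin.
    rewrite (RInt_ext_R _ (fun y => -1 * h y)), RInt_scal_R in Hlin; [lra | exact ex_pos |].
    intros y Hy; rewrite Rmin_left, Rmax_right in Hy by lra.
    replace (-1 * y + 0) with (- y) by ring; rewrite He by lra; reflexivity. }
  rewrite <- (RInt_Chasles h (- beta) 0 beta ex_neg ex_pos), Hrefl.
  change (RInt h 0 beta + RInt h 0 beta = 2 * RInt h 0 beta). ring.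
Qed.

(** * The unit sphere in Mercator coordinates *)

(* [phi0] and [tanh] are the conformal factor and the height of the Mercator
   chart (x, y) |-> (phi0 y cos x, phi0 y sin x, tanh y) of the unit sphere. *)

Lemma phi0_exp y : phi0 y = 2 * exp y / (1 + exp y * exp y).
Proof. unfold phi0. replace (2 * y) with (y + y) by ring. now rewrite exp_plus. Qed.

Lemma tanh_exp y : tanh y = (exp y * exp y - 1) / (exp y * exp y + 1).
Proof.
  unfold tanh, sinh, cosh. rewrite exp_Ropp. pose proof (exp_pos y).
  field. split; nra.
Qed.

Lemma phi0_pos y : 0 < phi0 y.
Proof. rewrite phi0_exp. pose proof (exp_pos y). apply Rdiv_lt_0_compat; nra. Qed.

Lemma phi0_sqr_add_tanh_sqr y : phi0 y ^ 2 + tanh y ^ 2 = 1.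
Proof. rewrite phi0_exp, tanh_exp. pose proof (exp_pos y). field. nra. Qed.

Lemma tanh_bound y : -1 < tanh y < 1.
Proof.
  rewrite tanh_exp. pose proof (exp_pos y).
  assert (Hsq : 0 < exp y * exp y) by nra.
  split; apply Rmult_lt_reg_r with (exp y * exp y + 1); try lra; field_simplify; lra.
Qed.

Lemma tanh_0 : tanh 0 = 0.
Proof. unfold tanh. rewrite sinh_0, cosh_0. field. Qed.

Lemma tanh_pos y : 0 < y -> 0 < tanh y.
Proof.
  intros Hy. rewrite tanh_exp.
  assert (1 < exp y) by (rewrite <- exp_0; apply exp_increasing; lra).
  apply Rdiv_lt_0_compat; nra.
Qed.

Lemma phi0_opp y : phi0 (- y) = phi0 y.
Proof. rewrite !phi0_exp, exp_Ropp. pose proof (exp_pos y). field. nra. Qed.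

Lemma tanh_opp y : tanh (- y) = - tanh y.
Proof. rewrite !tanh_exp, exp_Ropp. pose proof (exp_pos y). field. nra. Qed.

Lemma is_derive_phi0 y : is_derive phi0 y (- (phi0 y * tanh y)).
Proof.
  apply is_derive_ext with (fun z => 2 * exp z / (1 + exp z * exp z)).
  { intros; now rewrite phi0_exp. }
  pose proof (exp_pos y).
  evar_last; [auto_derive; [nra | reflexivity] |].
  rewrite phi0_exp, tanh_exp. field. nra.
Qed.

Lemma is_derive_tanh y : is_derive tanh y (phi0 y ^ 2).
Proof.
  apply is_derive_ext with (fun z => (exp z * exp z - 1) / (exp z * exp z + 1)).
  { intros; now rewrite tanh_exp. }
  pose proof (exp_pos y).
  evar_last; [auto_derive; [nra | reflexivity] |].
  rewrite phi0_exp. field. nra.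
Qed.

Lemma continuous_phi0 y : continuous phi0 y.
Proof. apply continuous_of_ex_derive. eexists. apply is_derive_phi0. Qed.

Lemma continuous_tanh y : continuous tanh y.
Proof. apply continuous_of_ex_derive. eexists. apply is_derive_tanh. Qed.

Definition artanh (u : R) : R := ln ((1 + u) / (1 - u)) / 2.

Lemma artanh_tanh y : artanh (tanh y) = y.
Proof.
  unfold artanh. rewrite tanh_exp. pose proof (exp_pos y).
  replace ((1 + (exp y * exp y - 1) / (exp y * exp y + 1))
           / (1 - (exp y * exp y - 1) / (exp y * exp y + 1)))
    with (exp (y + y)) by (rewrite exp_plus; field; nra).
  rewrite ln_exp. field.
Qed.

Lemma artanh_opp u : -1 < u < 1 -> artanh (- u) = - artanh u.
Proof.
  intros Hu. unfold artanh.
  replace ((1 + - u) / (1 - - u)) with (/ ((1 + u) / (1 - u))) by (field; lra).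
  rewrite ln_Rinv by (apply Rdiv_lt_0_compat; lra). field.
Qed.

Lemma artanh_le_compat u v : -1 < u -> u <= v -> v < 1 -> artanh u <= artanh v.
Proof.
  intros Hu Huv Hv. unfold artanh.
  destruct (Req_dec u v) as [-> | Hne]; [lra |].
  apply Rmult_le_compat_r; [lra |]. left. apply ln_increasing.
  - apply Rdiv_lt_0_compat; lra.
  - apply Rmult_lt_reg_r with ((1 - u) * (1 - v)); [nra |].
    field_simplify; [nra | lra | lra].
Qed.

Lemma artanh_bound u b : Rabs u <= tanh b -> - b <= artanh u <= b.
Proof.
  intros Hu. apply Rabs_le_between in Hu. pose proof (tanh_bound b).
  assert (Hlo : artanh (- tanh b) <= artanh u) by (apply artanh_le_compat; lra).
  assert (Hhi : artanh u <= artanh (tanh b)) by (apply artanh_le_compat; lra).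
  rewrite artanh_opp, artanh_tanh in Hlo by lra. rewrite artanh_tanh in Hhi. lra.
Qed.

Lemma exp_le_compat x y : x <= y -> exp x <= exp y.
Proof. intros [Hlt | ->]; [left; now apply exp_increasing | lra]. Qed.

(* [2 + sqrt 3] is the larger root of [e^2 - 4 e + 1], so that [phi0 beta1 = 1/2]. *)
Definition beta1 : R := ln (2 + sqrt 3).

Lemma sqrt3_facts : sqrt 3 * sqrt 3 = 3 /\ 1 < sqrt 3.
Proof.
  split; [apply sqrt_sqrt; lra |].
  rewrite <- sqrt_1. apply sqrt_lt_1_alt. lra.
Qed.

Lemma exp_beta1 : exp beta1 = 2 + sqrt 3.
Proof. unfold beta1. apply exp_ln. pose proof sqrt3_facts. lra. Qed.

Lemma beta1_pos : 0 < beta1.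
Proof. unfold beta1. rewrite <- ln_1. apply ln_increasing; pose proof sqrt3_facts; lra. Qed.

Lemma phi0_ge_half y : 0 <= y <= beta1 -> 1 / 2 <= phi0 y.
Proof.
  intros Hy. rewrite phi0_exp. pose proof sqrt3_facts.
  assert (1 <= exp y) by (rewrite <- exp_0; apply exp_le_compat; lra).
  assert (exp y <= 2 + sqrt 3) by (rewrite <- exp_beta1; apply exp_le_compat; lra).
  apply Rmult_le_reg_r with (1 + exp y * exp y); [nra |].
  field_simplify; nra.
Qed.

Lemma phi0_le_half y : beta1 <= y -> phi0 y <= 1 / 2.
Proof.
  intros Hy. rewrite phi0_exp. pose proof sqrt3_facts.
  assert (2 + sqrt 3 <= exp y) by (rewrite <- exp_beta1; apply exp_le_compat; lra).
  apply Rmult_le_reg_r with (1 + exp y * exp y); [nra |].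
  field_simplify; nra.
Qed.

Lemma phib_eq_phi0 x y : 0 <= y <= beta1 -> phib x y = phi0 y.
Proof. intros. apply Rmax_left, phi0_ge_half. auto. Qed.

Lemma phib_eq_half x y : beta1 <= y -> phib x y = 1 / 2.
Proof. intros. apply Rmax_right, phi0_le_half. auto. Qed.

Lemma continuous_phib x y : continuous (phib x) y.
Proof.
  apply (continuous_Rmax phi0 (fun _ => 1 / 2)); [apply continuous_phi0 | apply continuous_const].
Qed.

(* Leaves the side conditions [_ <> 0] and [0 < _] of [Rinv] and [ln], and the
   continuity of the unknown functions, to the caller. *)
Ltac auto_cont :=
  repeat match goal with
  | |- continuous (fun _ => ?c) _ => apply continuous_const
  | |- continuous (fun t => t) _ => apply continuous_id
  | |- continuous (fun t => @?a t + @?b t) _ => apply (continuous_plus a b)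
  | |- continuous (fun t => @?a t - @?b t) _ => apply (continuous_minus a b)
  | |- continuous (fun t => @?a t * @?b t) _ => apply (continuous_mult a b)
  | |- continuous (fun t => @?a t / @?b t) _ => apply (continuous_mult a (fun t => / b t))
  | |- continuous (fun t => - @?a t) _ => apply (continuous_opp a)
  | |- continuous (fun t => Rmax (@?a t) (@?b t)) _ => apply (continuous_Rmax a b)
  | |- continuous (fun t => / @?a t) _ =>
      apply (continuous_comp a Rinv); [| apply continuous_Rinv]
  | |- continuous (fun t => sin (@?a t)) _ =>
      apply (continuous_comp a sin); [| apply continuous_sin]
  | |- continuous (fun t => cos (@?a t)) _ =>
      apply (continuous_comp a cos); [| apply continuous_cos]
  | |- continuous (fun t => sqrt (@?a t)) _ =>
      apply (continuous_comp a sqrt); [| apply continuous_sqrt]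
  | |- continuous (fun t => ln (@?a t)) _ =>
      apply (continuous_comp a ln); [| apply continuous_ln]
  | |- continuous (fun t => (@?a t) ^ ?n) _ =>
      apply (continuous_comp a (fun y => y ^ n)); [| apply continuous_pow]
  | |- continuous (fun t => phi0 (@?a t)) _ =>
      apply (continuous_comp a phi0); [| apply continuous_phi0]
  | |- continuous (fun t => tanh (@?a t)) _ =>
      apply (continuous_comp a tanh); [| apply continuous_tanh]
  | |- continuous (fun t => phib ?x (@?a t)) _ =>
      apply (continuous_comp a (phib x)); [| apply continuous_phib]
  | |- continuous sin _ => apply continuous_sin
  | |- continuous cos _ => apply continuous_cos
  | |- continuous phi0 _ => apply continuous_phi0
  | |- continuous tanh _ => apply continuous_tanh
  end.

(** * Loops have [phib]-length at least [PI] *)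

Lemma cauchy_schwarz3 v1 v2 v3 w1 w2 w3 :
  (v1 * w1 + v2 * w2 + v3 * w3) ^ 2 <= (v1 ^ 2 + v2 ^ 2 + v3 ^ 2) * (w1 ^ 2 + w2 ^ 2 + w3 ^ 2).
Proof.
  pose proof (pow2_ge_0 (v1 * w2 - v2 * w1)). pose proof (pow2_ge_0 (v1 * w3 - v3 * w1)).
  pose proof (pow2_ge_0 (v2 * w3 - v3 * w2)). nra.
Qed.

(* Cauchy-Schwarz applied to [v] and the component of [q] orthogonal to [p]. *)
Lemma tangent_dot_sqr_le p1 p2 p3 q1 q2 q3 v1 v2 v3 :
  p1 ^ 2 + p2 ^ 2 + p3 ^ 2 = 1 -> q1 ^ 2 + q2 ^ 2 + q3 ^ 2 = 1 ->
  v1 * p1 + v2 * p2 + v3 * p3 = 0 ->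
  (v1 * q1 + v2 * q2 + v3 * q3) ^ 2
    <= (v1 ^ 2 + v2 ^ 2 + v3 ^ 2) * (1 - (p1 * q1 + p2 * q2 + p3 * q3) ^ 2).
Proof.
  intros Hp Hq Hv. set (s := p1 * q1 + p2 * q2 + p3 * q3).
  pose proof (cauchy_schwarz3 v1 v2 v3 (q1 - s * p1) (q2 - s * p2) (q3 - s * p3)) as H.
  replace (v1 * (q1 - s * p1) + v2 * (q2 - s * p2) + v3 * (q3 - s * p3))
    with ((v1 * q1 + v2 * q2 + v3 * q3) - s * (v1 * p1 + v2 * p2 + v3 * p3)) in H by ring.
  replace ((q1 - s * p1) ^ 2 + (q2 - s * p2) ^ 2 + (q3 - s * p3) ^ 2)
    with ((q1 ^ 2 + q2 ^ 2 + q3 ^ 2) - 2 * s * s + s ^ 2 * (p1 ^ 2 + p2 ^ 2 + p3 ^ 2)) in H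
    by (unfold s; ring).
  rewrite Hv, Hq, Hp in H. replace (1 - 2 * s * s + s ^ 2 * 1) with (1 - s ^ 2) in H by ring.
  rewrite Rmult_0_r, Rminus_0_r in H. exact H.
Qed.

(* The scalar product of the points of the unit sphere with Mercator
   coordinates [(x0, y0)] and [(x, y)], and its partial derivatives in [x], [y]. *)
Definition sphere_cos (x0 y0 x y : R) : R :=
  phi0 y * phi0 y0 * cos (x - x0) + tanh y * tanh y0.

Definition sphere_cos_dx (x0 y0 x y : R) : R := - (phi0 y * phi0 y0 * sin (x - x0)).

Definition sphere_cos_dy (x0 y0 x y : R) : R :=
  - (phi0 y * tanh y) * phi0 y0 * cos (x - x0) + phi0 y ^ 2 * tanh y0.

Lemma sphere_cos_refl x0 y0 : sphere_cos x0 y0 x0 y0 = 1.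
Proof.
  unfold sphere_cos. rewrite Rminus_diag, cos_0.
  pose proof (phi0_sqr_add_tanh_sqr y0). lra.
Qed.

Lemma sphere_cos_antipode x0 y0 x : cos (x - x0) = -1 -> sphere_cos x0 y0 x (- y0) = -1.
Proof.
  intros Hx. unfold sphere_cos. rewrite Hx, phi0_opp, tanh_opp.
  pose proof (phi0_sqr_add_tanh_sqr y0). lra.
Qed.

Lemma sphere_cos_sqr_le x0 y0 x y : sphere_cos x0 y0 x y ^ 2 <= 1.
Proof.
  pose proof (phi0_sqr_add_tanh_sqr y) as Hy. pose proof (phi0_sqr_add_tanh_sqr y0) as Hy0.
  pose proof (sin2_cos2 (x - x0)) as Hsc. unfold Rsqr in Hsc.
  pose proof (cauchy_schwarz3 (phi0 y * cos (x - x0)) (phi0 y * sin (x - x0)) (tanh y)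
                              (phi0 y0) 0 (tanh y0)) as H.
  unfold sphere_cos.
  replace ((phi0 y * cos (x - x0)) ^ 2 + (phi0 y * sin (x - x0)) ^ 2 + tanh y ^ 2)
    with (phi0 y ^ 2 * (sin (x - x0) * sin (x - x0) + cos (x - x0) * cos (x - x0))
          + tanh y ^ 2) in H by ring.
  rewrite Hsc in H. nra.
Qed.

(* That is, the spherical distance [acos (sphere_cos x0 y0)] to [(x0, y0)] is
   1-Lipschitz for the metric [phi0 ^ 2 g_flat]. *)
Lemma sphere_cos_gradient x0 y0 x y a b :
  (sphere_cos_dx x0 y0 x y * a + sphere_cos_dy x0 y0 x y * b) ^ 2
    <= phi0 y ^ 2 * (a ^ 2 + b ^ 2) * (1 - sphere_cos x0 y0 x y ^ 2).
Proof.
  set (P := phi0 y). set (Q := tanh y). set (c := cos (x - x0)). set (s := sin (x - x0)).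
  assert (HPQ : P ^ 2 + Q ^ 2 = 1) by apply phi0_sqr_add_tanh_sqr.
  assert (H0 : phi0 y0 ^ 2 + tanh y0 ^ 2 = 1) by apply phi0_sqr_add_tanh_sqr.
  assert (Hsc : s * s + c * c = 1) by (pose proof (sin2_cos2 (x - x0)) as H; exact H).
  pose proof (tangent_dot_sqr_le (P * c) (P * s) Q (phi0 y0) 0 (tanh y0)
      (- P * Q * b * c - P * s * a) (- P * Q * b * s + P * c * a) (P ^ 2 * b)) as V.
  unfold sphere_cos_dx, sphere_cos_dy, sphere_cos. fold P Q c s.
  replace ((- P * Q * b * c - P * s * a) * phi0 y0 + (- P * Q * b * s + P * c * a) * 0
           + P ^ 2 * b * tanh y0)
    with (- (P * phi0 y0 * s) * a + (- (P * Q) * phi0 y0 * c + P ^ 2 * tanh y0) * b)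
    in V by ring.
  replace (P * c * phi0 y0 + P * s * 0 + Q * tanh y0) with (P * phi0 y0 * c + Q * tanh y0)
    in V by ring.
  assert (Hnorm : (- P * Q * b * c - P * s * a) ^ 2 + (- P * Q * b * s + P * c * a) ^ 2
                  + (P ^ 2 * b) ^ 2 = P ^ 2 * (a ^ 2 + b ^ 2)).
  { transitivity ((P ^ 2 * Q ^ 2 * b ^ 2 + P ^ 2 * a ^ 2) * (s * s + c * c) + P ^ 4 * b ^ 2);
      [ring | rewrite Hsc; replace (Q ^ 2) with (1 - P ^ 2) by lra; ring]. }
  rewrite Hnorm in V. apply V.
  - transitivity (P ^ 2 * (s * s + c * c) + Q ^ 2); [ring | rewrite Hsc; lra].
  - lra.
  - transitivity (P ^ 2 * Q * b * (1 - (s * s + c * c))); [ring | rewrite Hsc; ring].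
Qed.

Lemma is_derive_sphere_cos_path x0 y0 (g1 g2 : R -> R) t :
  ex_derive g1 t -> ex_derive g2 t ->
  is_derive (fun s => sphere_cos x0 y0 (g1 s) (g2 s)) t
    (sphere_cos_dx x0 y0 (g1 t) (g2 t) * Derive g1 t
     + sphere_cos_dy x0 y0 (g1 t) (g2 t) * Derive g2 t).
Proof.
  intros H1 H2. unfold sphere_cos, sphere_cos_dx, sphere_cos_dy.
  evar_last.
  { auto_derive; [repeat split; auto; eexists; first [apply is_derive_phi0 | apply is_derive_tanh]
                 | reflexivity]. }
  change (fun x => phi0 x) with phi0; change (fun x => tanh x) with tanh.
  change (fun x => g1 x) with g1; change (fun x => g2 x) with g2.
  rewrite (is_derive_unique _ _ _ (is_derive_phi0 (g2 t))),
          (is_derive_unique _ _ _ (is_derive_tanh (g2 t))).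
  unfold Rminus. ring.
Qed.

Lemma is_derive_asin u : -1 < u < 1 -> is_derive asin u (/ sqrt (1 - u ^ 2)).
Proof.
  intros Hu. apply is_derive_Reals.
  apply (derive_pt_eq_1 asin u _ (derivable_pt_asin u Hu)).
  rewrite derive_pt_asin. unfold Rsqr. rewrite Rdiv_1_l. do 3 f_equal. ring.
Qed.

Lemma Rabs_le_of_sqr_le x y : 0 <= y -> x ^ 2 <= y ^ 2 -> Rabs x <= y.
Proof.
  intros Hy H. rewrite <- (Rabs_pos_eq y Hy). apply Rsqr_le_abs_0.
  unfold Rsqr. nra.
Qed.

(* [sphere_cos] is squeezed into [(-1, 1)] by the factor [1 + d], where [asin]
   is differentiable. *)
Lemma asin_calibration_step S Sd N d :
  0 < d -> S ^ 2 <= 1 -> 0 <= N -> Sd ^ 2 <= N ^ 2 * (1 - S ^ 2) ->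
  - (Sd / (1 + d) / sqrt (1 - (S / (1 + d)) ^ 2)) <= N.
Proof.
  intros Hd HS HN HSd.
  assert (Hu : (S / (1 + d)) ^ 2 < 1).
  { replace ((S / (1 + d)) ^ 2) with (S ^ 2 / (1 + d) ^ 2) by (field; lra).
    apply Rmult_lt_reg_r with ((1 + d) ^ 2); [nra |]. field_simplify; nra. }
  set (A := sqrt (1 - (S / (1 + d)) ^ 2)).
  assert (HA : 0 < A) by (apply sqrt_lt_R0; lra).
  assert (HA2 : A ^ 2 = 1 - (S / (1 + d)) ^ 2) by (unfold A; rewrite pow2_sqrt; lra).
  assert (Hkey : Rabs Sd <= N * ((1 + d) * A)).
  { apply Rabs_le_of_sqr_le; [apply Rmult_le_pos; [lra | apply Rmult_le_pos; lra] |].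
    replace ((N * ((1 + d) * A)) ^ 2) with (N ^ 2 * ((1 + d) ^ 2 - S ^ 2))
      by (rewrite !Rpow_mult_distr, HA2; field; lra).
    nra. }
  replace (- (Sd / (1 + d) / A)) with (- Sd / ((1 + d) * A)) by (field; lra).
  apply Rmult_le_reg_r with ((1 + d) * A); [nra |].
  replace (- Sd / ((1 + d) * A) * ((1 + d) * A)) with (- Sd) by (field; lra).
  pose proof (Rabs_maj2 Sd). lra.
Qed.

Lemma PI_le_of_asin_bounds L : (forall d, 0 < d -> 2 * asin (1 / (1 + d)) <= L) -> PI <= L.
Proof.
  intros Hd. destruct (Rle_or_lt PI L) as [| HL]; [assumption | exfalso].
  pose proof PI_RGT_0.
  set (u := (Rmax L 0 / 2 + PI / 2) / 2).
  pose proof (Rmax_l L 0). pose proof (Rmax_r L 0).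
  assert (Hu : 0 < u < PI / 2).
  { assert (Rmax L 0 < PI) by (apply Rmax_lub_lt; lra). unfold u. lra. }
  assert (Hsin : 0 < sin u < 1).
  { split; [apply sin_gt_0; lra |]. rewrite <- sin_PI2. apply sin_increasing_1; lra. }
  specialize (Hd (1 / sin u - 1)).
  replace (1 / (1 + (1 / sin u - 1))) with (sin u) in Hd by (field; lra).
  rewrite asin_sin in Hd by lra.
  assert (0 < 1 / sin u - 1).
  { apply Rlt_0_minus. apply Rmult_lt_reg_r with (sin u); [lra |]. field_simplify; lra. }
  specialize (Hd ltac:(assumption)). unfold u in Hd. lra.
Qed.

Section C1Path.

Variables g1 g2 : R -> R.
Hypothesis g_derive : forall t, 0 <= t <= 1 -> ex_derive g1 t /\ ex_derive g2 t.
Hypothesis g_continuous_derive :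
  forall t, 0 <= t <= 1 -> continuous (Derive g1) t /\ continuous (Derive g2) t.

Lemma ex_RInt_length_integrand (F : R -> R) :
  (forall y, continuous F y) ->
  ex_RInt (fun t => F (g2 t) * sqrt (Derive g1 t ^ 2 + Derive g2 t ^ 2)) 0 1.
Proof.
  intros HF. apply ex_RInt_continuous_on; [lra |]. intros t Ht.
  destruct (g_derive t Ht) as [_ H2]. destruct (g_continuous_derive t Ht).
  apply continuous_of_ex_derive in H2.
  apply (continuous_mult (fun t => F (g2 t))); [apply (continuous_comp g2 F); auto |].
  auto_cont; auto.
Qed.

Let S (t : R) : R := sphere_cos (g1 0) (g2 0) (g1 t) (g2 t).

Let S' (t : R) : R :=
  sphere_cos_dx (g1 0) (g2 0) (g1 t) (g2 t) * Derive g1 t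
  + sphere_cos_dy (g1 0) (g2 0) (g1 t) (g2 t) * Derive g2 t.

Let slope (d t : R) : R := S' t / (1 + d) / sqrt (1 - (S t / (1 + d)) ^ 2).

Lemma sphere_cos_path_scaled_bound d t : 0 < d -> -1 < S t / (1 + d) < 1.
Proof.
  intros Hd. pose proof (sphere_cos_sqr_le (g1 0) (g2 0) (g1 t) (g2 t)) as HS.
  assert (Habs : Rabs (S t) <= 1) by (apply Rabs_le_of_sqr_le; unfold S; lra).
  apply Rabs_le_between in Habs.
  split; [apply Rmult_lt_reg_r with (1 + d) | apply Rmult_lt_reg_r with (1 + d)];
    try lra; field_simplify; lra.
Qed.

Lemma sqrt_one_minus_scaled_pos d t : 0 < d -> 0 < sqrt (1 - (S t / (1 + d)) ^ 2).
Proof.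
  intros Hd. apply sqrt_lt_R0. pose proof (sphere_cos_path_scaled_bound d t Hd). nra.
Qed.

Lemma is_derive_calibration d t : 0 < d -> 0 <= t <= 1 ->
  is_derive (fun s => asin (S s / (1 + d))) t (slope d t).
Proof.
  intros Hd Ht. destruct (g_derive t Ht) as [H1 H2].
  pose proof (sqrt_one_minus_scaled_pos d t Hd).
  evar_last.
  { apply (is_derive_comp asin (fun s => S s / (1 + d)));
      [apply is_derive_asin, sphere_cos_path_scaled_bound, Hd |].
    apply (is_derive_ext (fun s => / (1 + d) * S s)); [intros s; apply Rmult_comm |].
    apply is_derive_scal, is_derive_sphere_cos_path; assumption. }
  unfold slope, S', scal; simpl; unfold mult; simpl. unfold Rdiv. ring.
Qed.

Lemma continuous_calibration_slope d t : 0 < d -> 0 <= t <= 1 -> continuous (slope d) t.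
Proof.
  intros Hd Ht. destruct (g_derive t Ht) as [H1 H2]. destruct (g_continuous_derive t Ht).
  apply continuous_of_ex_derive in H1. apply continuous_of_ex_derive in H2.
  pose proof (sqrt_one_minus_scaled_pos d t Hd) as Hs.
  unfold slope, S', S, sphere_cos, sphere_cos_dx, sphere_cos_dy in *.
  auto_cont; auto; lra.
Qed.

(* [asin (sphere_cos / (1 + d))] along the path is a calibration: its
   derivative is bounded by the spherical speed. *)
Lemma calibration_bound d : 0 < d -> sphere_cos (g1 0) (g2 0) (g1 1) (g2 1) = -1 ->
  2 * asin (1 / (1 + d))
    <= RInt (fun t => phi0 (g2 t) * sqrt (Derive g1 t ^ 2 + Derive g2 t ^ 2)) 0 1.
Proof.
  intros Hd Hend.
  assert (Hex : ex_RInt (slope d) 0 1)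
    by (apply ex_RInt_continuous_on; [lra | intros; apply continuous_calibration_slope; auto]).
  assert (HI : RInt (slope d) 0 1 = - (2 * asin (1 / (1 + d)))).
  { rewrite (RInt_is_derive (fun s => asin (S s / (1 + d))));
      [| rewrite Rmin_left, Rmax_right by lra; intros; now apply is_derive_calibration
       | rewrite Rmin_left, Rmax_right by lra; intros; now apply continuous_calibration_slope].
    unfold S. rewrite Hend, sphere_cos_refl.
    replace (-1 / (1 + d)) with (- (1 / (1 + d))) by (field; lra).
    rewrite asin_opp. lra. }
  replace (2 * asin (1 / (1 + d))) with (RInt (fun t => -1 * slope d t) 0 1)
    by (rewrite RInt_scal_R, HI by exact Hex; lra).
  apply RInt_le; [lra | | apply ex_RInt_length_integrand, continuous_phi0 |].
  - apply (ex_RInt_scal (V := R_NormedModule) _ _ _ (-1) Hex).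
  - intros t Ht. replace (-1 * slope d t) with (- slope d t) by ring.
    apply asin_calibration_step; [exact Hd | apply sphere_cos_sqr_le | |].
    + apply Rmult_le_pos; [apply Rlt_le, phi0_pos | apply sqrt_pos].
    + rewrite Rpow_mult_distr, pow2_sqrt by nra. apply sphere_cos_gradient.
Qed.

Lemma spherical_length_ge_PI :
  sphere_cos (g1 0) (g2 0) (g1 1) (g2 1) = -1 ->
  PI <= RInt (fun t => phi0 (g2 t) * sqrt (Derive g1 t ^ 2 + Derive g2 t ^ 2)) 0 1.
Proof. intros Hend. apply PI_le_of_asin_bounds. intros d Hd. now apply calibration_bound. Qed.

Lemma phib_length_ge_half_displacement :
  / 2 * Rabs (g1 1 - g1 0)
    <= RInt (fun t => phib (g1 t) (g2 t) * sqrt (Derive g1 t ^ 2 + Derive g2 t ^ 2)) 0 1.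
Proof.
  assert (Hex : ex_RInt (Derive g1) 0 1)
    by (apply ex_RInt_continuous_on; [lra | intros t Ht; apply (g_continuous_derive t Ht)]).
  assert (Hdisp : RInt (Derive g1) 0 1 = g1 1 - g1 0).
  { apply RInt_is_derive; rewrite Rmin_left, Rmax_right by lra; intros t Ht.
    - apply Derive_correct, (g_derive t Ht).
    - apply (g_continuous_derive t Ht). }
  rewrite <- Hdisp.
  apply Rle_trans with (/ 2 * RInt (fun t => Rabs (Derive g1 t)) 0 1).
  - apply Rmult_le_compat_l; [lra |]. apply abs_RInt_le; [lra | exact Hex].
  - rewrite <- RInt_scal_R by apply (ex_RInt_norm _ _ _ Hex).
    apply RInt_le;
      [lra | exact (ex_RInt_scal (V := R_NormedModule) _ 0 1 (/ 2) (ex_RInt_norm _ _ _ Hex))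
       | apply (ex_RInt_length_integrand (phib 0)), continuous_phib |].
    intros t _. unfold phib.
    pose proof (Rmax_l (Rabs (Derive g1 t)) (Rabs (Derive g2 t))).
    pose proof (sqrt_plus_sqr (Derive g1 t) (Derive g2 t)).
    pose proof (Rmax_r (phi0 (g2 t)) (1 / 2)). pose proof (Rabs_pos (Derive g1 t)). nra.
Qed.

Lemma phib_length_ge_spherical_length :
  RInt (fun t => phi0 (g2 t) * sqrt (Derive g1 t ^ 2 + Derive g2 t ^ 2)) 0 1
    <= RInt (fun t => phib (g1 t) (g2 t) * sqrt (Derive g1 t ^ 2 + Derive g2 t ^ 2)) 0 1.
Proof.
  apply RInt_le; [lra | apply ex_RInt_length_integrand, continuous_phi0
                 | apply (ex_RInt_length_integrand (phib 0)), continuous_phib |].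
  intros t _. apply Rmult_le_compat_r; [apply sqrt_pos | apply Rmax_l].
Qed.

End C1Path.

Lemma cos_odd_mult_PI k : Z.Odd k -> cos (IZR k * PI) = -1.
Proof.
  intros [m ->]. rewrite plus_IZR, mult_IZR.
  replace ((IZR 2 * IZR m + IZR 1) * PI) with (2 * (IZR m * PI) + PI) by (simpl; ring).
  rewrite neg_cos, cos_2a_sin, (sin_eq_0_1 (IZR m * PI)) by (exists m; reflexivity).
  ring.
Qed.

Lemma powerRZ_m1_odd k : Z.Odd k -> powerRZ (-1) k = -1.
Proof.
  intros [m ->]. rewrite powerRZ_add, <- Z.add_diag, powerRZ_add by lra.
  rewrite <- powerRZ_mult. replace (-1 * -1) with 1 by ring. rewrite powerRZ_R1.
  simpl. ring.
Qed.

Lemma Rabs_IZR_even_ge2 k : Z.Even k -> k <> 0%Z -> 2 <= Rabs (IZR k).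
Proof.
  intros [m ->] Hk. rewrite mult_IZR, Rabs_mult, Rabs_pos_eq by (simpl; lra).
  assert (1 <= Rabs (IZR m)) by (rewrite <- abs_IZR; apply IZR_le; lia).
  simpl. lra.
Qed.

(* A lift with even [k] winds twice around [M_beta], so its horizontal
   displacement is at least [2 PI] while [phib >= 1/2]; a lift with odd [k]
   joins antipodal points of the sphere, while [phib >= phi0]. *)
Lemma phib_length_ge_PI beta g1 g2 :
  noncontractible_loop_lift beta g1 g2 -> PI <= curve_length phib g1 g2.
Proof.
  intros [[Hd [Hc _]] [k [Hk0 Heq]]].
  unfold Apow in Heq; simpl in Heq. injection Heq as E1 E2.
  pose proof PI_RGT_0. unfold curve_length.
  destruct (Z.Even_or_Odd k) as [Hev | Hodd].
  - eapply Rle_trans; [| apply phib_length_ge_half_displacement; assumption].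
    rewrite E1. replace (g1 0 + IZR k * PI - g1 0) with (IZR k * PI) by ring.
    rewrite Rabs_mult, (Rabs_pos_eq PI) by lra.
    pose proof (Rabs_IZR_even_ge2 k Hev Hk0). nra.
  - eapply Rle_trans; [| apply phib_length_ge_spherical_length; assumption].
    apply spherical_length_ge_PI; [exact Hd | exact Hc |].
    rewrite E1, E2, powerRZ_m1_odd by exact Hodd. replace (-1 * g2 0) with (- g2 0) by ring.
    apply sphere_cos_antipode. replace (g1 0 + IZR k * PI - g1 0) with (IZR k * PI) by ring.
    now apply cos_odd_mult_PI.
Qed.

(** * Wallis integrals and an average over great circles *)

Definition wallis (b : R) (m : nat) : R := RInt (fun x => sin x ^ m) 0 b.

Lemma is_derive_sin_pow_cos m x :
  is_derive (fun x => sin x ^ S m * cos x) x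
    (INR (m + 1) * sin x ^ m - INR (m + 2) * sin x ^ (m + 2)).
Proof.
  evar_last; [auto_derive; [auto | reflexivity] |].
  change (match m with 0%nat => 1 | S _ => INR m + 1 end) with (INR (S m)).
  transitivity (INR (S m) * sin x ^ m * (cos x * cos x) - sin x ^ m * (sin x * sin x));
    [ring |].
  pose proof (sin2_cos2 x) as Hsc. unfold Rsqr in Hsc.
  replace (cos x * cos x) with (1 - sin x * sin x) by lra.
  rewrite pow_add, !plus_INR, S_INR. simpl. ring.
Qed.

Lemma wallis_rec b m : sin b * cos b = 0 ->
  INR (m + 2) * wallis b (m + 2) = INR (m + 1) * wallis b m.
Proof.
  intros Hb.
  assert (HI : RInt (fun x => INR (m + 1) * sin x ^ m - INR (m + 2) * sin x ^ (m + 2)) 0 b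
               = sin b ^ S m * cos b - sin 0 ^ S m * cos 0).
  { apply (RInt_is_derive (fun x => sin x ^ S m * cos x)); intros x _;
      [apply is_derive_sin_pow_cos | auto_cont]. }
  rewrite RInt_minus_R, !RInt_scal_R in HI by (apply ex_RInt_of_continuous; intros; auto_cont).
  simpl pow in HI. rewrite sin_0 in HI.
  replace (sin b * sin b ^ m * cos b) with (sin b ^ m * (sin b * cos b)) in HI by ring.
  rewrite Hb in HI. unfold wallis. lra.
Qed.

Lemma wallis_0 b : wallis b 0 = b.
Proof. unfold wallis. simpl. rewrite RInt_const_R. ring. Qed.

Lemma wallis_1 b : wallis b 1 = 1 - cos b.
Proof.
  unfold wallis. rewrite (RInt_is_derive (fun x => - cos x)); [rewrite cos_0; ring | |];
    intros x _; [| auto_cont].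
  evar_last; [auto_derive; [auto | reflexivity] | ring].
Qed.

Lemma sin_cos_PI2 : sin (PI / 2) * cos (PI / 2) = 0.
Proof. rewrite cos_PI2. ring. Qed.

Lemma sin_cos_PI : sin PI * cos PI = 0.
Proof. rewrite sin_PI. ring. Qed.

Lemma wallis_product m : wallis PI m * wallis (PI / 2) (S m) = PI / INR (S m).
Proof.
  pose proof PI_RGT_0.
  enough (Hpair : wallis PI m * wallis (PI / 2) (S m) = PI / INR (S m)
                  /\ wallis PI (S m) * wallis (PI / 2) (S (S m)) = PI / INR (S (S m)))
    by exact (proj1 Hpair).
  { induction m as [| m IH].
    - pose proof (wallis_rec (PI / 2) 0 sin_cos_PI2) as H2. simpl in H2.
      rewrite wallis_0, wallis_1, cos_PI2, wallis_1, cos_PI. simpl.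
      rewrite wallis_0 in H2. split; [field | lra].
    - destruct IH as [IH IH']. split; [exact IH' |].
      pose proof (wallis_rec PI m sin_cos_PI) as Hpi.
      pose proof (wallis_rec (PI / 2) (S m) sin_cos_PI2) as Hpi2.
      replace (m + 2)%nat with (S (S m)) in Hpi by lia.
      replace (m + 1)%nat with (S m) in Hpi by lia.
      replace (S m + 2)%nat with (S (S (S m))) in Hpi2 by lia.
      replace (S m + 1)%nat with (S (S m)) in Hpi2 by lia.
      rewrite !S_INR in *. pose proof (pos_INR m).
      apply Rmult_eq_reg_l with ((INR m + 1 + 1) * (INR m + 1 + 1 + 1)); [| nra].
      transitivity ((INR m + 1 + 1) * wallis PI (S (S m))
                    * ((INR m + 1 + 1 + 1) * wallis (PI / 2) (S (S (S m))))); [ring |].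
      rewrite Hpi, Hpi2.
      transitivity ((INR m + 1) * (INR m + 1 + 1)
                    * (wallis PI m * wallis (PI / 2) (S m))); [ring |].
      rewrite IH. field. lra. }
Qed.

Definition sin_average (G : R -> R) : R :=
  RInt (fun a => sin a * RInt (fun t => G (sin a * sin (PI * t))) 0 1) 0 (PI / 2).

Lemma sin_mult_sin_bound a t : -1 <= sin a * sin (PI * t) <= 1.
Proof.
  pose proof (SIN_bound a). pose proof (SIN_bound (PI * t)).
  apply Rabs_le_between. rewrite Rabs_mult.
  apply Rle_trans with (1 * 1); [| lra].
  apply Rmult_le_compat; try apply Rabs_pos; apply Rabs_le; lra.
Qed.

Lemma sin_mult_sin_nonneg a t : 0 <= a <= PI / 2 -> 0 <= t <= 1 -> 0 <= sin a * sin (PI * t).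
Proof. pose proof PI_RGT_0. intros. apply Rmult_le_pos; apply sin_ge_0; nra. Qed.

Lemma sin_average_ext (G H : R -> R) : (forall z, G z = H z) -> sin_average G = sin_average H.
Proof.
  intros E. unfold sin_average. apply RInt_ext_R. intros a _. f_equal.
  apply RInt_ext_R. intros t _. apply E.
Qed.

Section SinAverage.

Variable G : R -> R.
Hypothesis G_cont : forall z, -1 <= z <= 1 -> continuous G z.

Lemma ex_RInt_sin_average_inner a : ex_RInt (fun t => G (sin a * sin (PI * t))) 0 1.
Proof.
  apply ex_RInt_continuous_on; [lra |]. intros t _.
  apply (continuous_comp (fun t => sin a * sin (PI * t)) G); [auto_cont |].
  apply G_cont, sin_mult_sin_bound.
Qed.

(* By uniform continuity of [G] on [[-1, 1]]. *)
Lemma continuous_sin_average_inner a :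
  continuous (fun a => RInt (fun t => G (sin a * sin (PI * t))) 0 1) a.
Proof.
  apply continuity_pt_filterlim. intros eps Heps.
  assert (Hc : forall z, -1 <= z <= 1 -> continuity_pt G z)
    by (intros; apply continuity_pt_filterlim, G_cont; auto).
  destruct (Heine_cor2 Hc (mkposreal (eps / 2) ltac:(lra))) as [delta Hdelta]. simpl in Hdelta.
  assert (Hsin : continuity_pt sin a) by (apply continuity_pt_filterlim, continuous_sin).
  destruct (Hsin delta (cond_pos delta)) as [d [Hd Hs]].
  exists d. split; [exact Hd |]. intros b [_ Hb]. simpl in *. unfold R_dist in *.
  rewrite <- RInt_minus_R by apply ex_RInt_sin_average_inner.
  apply Rle_lt_trans with ((1 - 0) * (eps / 2)); [| lra].
  apply abs_RInt_le_const;
    [lra | apply (ex_RInt_minus (V := R_CompleteNormedModule)); apply ex_RInt_sin_average_inner |].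
  intros t _. left. apply Hdelta; try apply sin_mult_sin_bound.
  rewrite <- Rmult_minus_distr_r, Rabs_mult.
  apply Rle_lt_trans with (Rabs (sin b - sin a) * 1).
  - apply Rmult_le_compat_l; [apply Rabs_pos | apply Rabs_le, SIN_bound].
  - rewrite Rmult_1_r. destruct (Req_dec b a) as [-> | Hne].
    + rewrite Rminus_diag, Rabs_R0. apply cond_pos.
    + apply Hs. split; [split; [exact I | auto] | exact Hb].
Qed.

Lemma ex_RInt_sin_average :
  ex_RInt (fun a => sin a * RInt (fun t => G (sin a * sin (PI * t))) 0 1) 0 (PI / 2).
Proof.
  apply ex_RInt_of_continuous. intros a.
  apply (continuous_mult sin); [apply continuous_sin | apply continuous_sin_average_inner].
Qed.

Lemma sin_average_bound eps :
  (forall z, 0 <= z <= 1 -> Rabs (G z) <= eps) -> Rabs (sin_average G) <= eps.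
Proof.
  intros HG. pose proof PI_RGT_0.
  assert (Hinner : forall a, 0 <= a <= PI / 2 ->
                   Rabs (RInt (fun t => G (sin a * sin (PI * t))) 0 1) <= eps).
  { intros a Ha. replace eps with ((1 - 0) * eps) by ring.
    apply abs_RInt_le_const; [lra | apply ex_RInt_sin_average_inner |].
    intros t Ht. apply HG. split; [now apply sin_mult_sin_nonneg | apply sin_mult_sin_bound]. }
  unfold sin_average. eapply Rle_trans; [apply abs_RInt_le; [lra | apply ex_RInt_sin_average] |].
  apply Rle_trans with (RInt (fun a => eps * sin a ^ 1) 0 (PI / 2)).
  - apply RInt_le; [lra | apply (ex_RInt_norm _ _ _ ex_RInt_sin_average)
                   | apply ex_RInt_of_continuous; intros; auto_cont |].
    intros a Ha. rewrite Rabs_mult, Rabs_pos_eq by (apply sin_ge_0; lra).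
    rewrite pow_1, Rmult_comm. apply Rmult_le_compat_r; [apply sin_ge_0 | apply Hinner]; lra.
  - rewrite RInt_scal_R by (apply ex_RInt_of_continuous; intros; auto_cont).
    fold (wallis (PI / 2) 1). rewrite wallis_1, cos_PI2. lra.
Qed.

Lemma sin_average_ge c :
  (forall a, 0 <= a <= PI / 2 -> c <= RInt (fun t => G (sin a * sin (PI * t))) 0 1) ->
  c <= sin_average G.
Proof.
  intros Hc. pose proof PI_RGT_0.
  apply Rle_trans with (RInt (fun a => c * sin a ^ 1) 0 (PI / 2)).
  - rewrite RInt_scal_R by (apply ex_RInt_of_continuous; intros; auto_cont).
    fold (wallis (PI / 2) 1). rewrite wallis_1, cos_PI2. lra.
  - apply RInt_le; [lra | apply ex_RInt_of_continuous; intros; auto_cont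
                   | apply ex_RInt_sin_average |].
    intros a Ha. rewrite pow_1, Rmult_comm.
    apply Rmult_le_compat_l; [apply sin_ge_0 | apply Hc]; lra.
Qed.

End SinAverage.

Lemma sin_average_plus (G H : R -> R) :
  (forall z, -1 <= z <= 1 -> continuous G z) -> (forall z, -1 <= z <= 1 -> continuous H z) ->
  sin_average (fun z => G z + H z) = sin_average G + sin_average H.
Proof.
  intros HG HH. unfold sin_average.
  rewrite <- RInt_plus_R by (apply ex_RInt_sin_average; assumption).
  apply RInt_ext_R. intros a _.
  rewrite RInt_plus_R by (apply ex_RInt_sin_average_inner; assumption). ring.
Qed.

Lemma sin_average_scal (G : R -> R) c :
  (forall z, -1 <= z <= 1 -> continuous G z) ->
  sin_average (fun z => c * G z) = c * sin_average G.
Proof.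
  intros HG. unfold sin_average.
  rewrite <- RInt_scal_R by (apply ex_RInt_sin_average; assumption).
  apply RInt_ext_R. intros a _.
  rewrite RInt_scal_R by (apply ex_RInt_sin_average_inner; assumption). ring.
Qed.

Lemma RInt_sin_PI_pow m : PI * RInt (fun t => sin (PI * t) ^ m) 0 1 = wallis PI m.
Proof.
  assert (Hex : ex_RInt (fun x => sin x ^ m) (PI * 0 + 0) (PI * 1 + 0))
    by (apply ex_RInt_of_continuous; intros; auto_cont).
  pose proof (RInt_comp_lin (fun x => sin x ^ m) PI 0 0 1 Hex) as Hlin.
  rewrite Rmult_0_r, Rmult_1_r, Rplus_0_l, Rplus_0_r in Hlin.
  unfold wallis.
  rewrite <- Hlin, <- RInt_scal_R by (apply ex_RInt_of_continuous; intros; auto_cont).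
  apply RInt_ext_R. intros t _. now rewrite Rplus_0_r.
Qed.

Lemma RInt_pow_01 m : (RInt (fun z => z ^ m) 0 1 : R) = / INR (S m).
Proof.
  assert (HS : 0 < INR (S m)) by (apply lt_0_INR; lia).
  rewrite (RInt_is_derive (fun z => z ^ S m / INR (S m))); intros; [| | auto_cont].
  - rewrite pow1, pow_i by lia. field. lra.
  - evar_last; [auto_derive; [auto | reflexivity] |].
    change (match m with 0%nat => 1 | S _ => INR m + 1 end) with (INR (S m)). field. lra.
Qed.

Lemma sin_average_pow m : sin_average (fun z => z ^ m) = RInt (fun z => z ^ m) 0 1.
Proof.
  pose proof PI_RGT_0.
  unfold sin_average. rewrite RInt_pow_01.
  rewrite (RInt_ext_R _ (fun a => RInt (fun t => sin (PI * t) ^ m) 0 1 * sin a ^ S m)).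
  2:{ intros a _.
      rewrite (RInt_ext_R _ (fun t => sin a ^ m * sin (PI * t) ^ m))
        by (intros; apply Rpow_mult_distr).
      rewrite RInt_scal_R by (apply ex_RInt_of_continuous; intros; auto_cont).
      simpl pow. ring. }
  rewrite RInt_scal_R by (apply ex_RInt_of_continuous; intros; auto_cont).
  fold (wallis (PI / 2) (S m)).
  apply Rmult_eq_reg_l with PI; [| lra].
  rewrite <- Rmult_assoc, RInt_sin_PI_pow, wallis_product. field.
  apply not_0_INR. lia.
Qed.

Inductive polynomial_fun : (R -> R) -> Prop :=
| polynomial_const c : polynomial_fun (fun _ => c)
| polynomial_plus p q : polynomial_fun p -> polynomial_fun q -> polynomial_fun (fun x => p x + q x)
| polynomial_scal c p : polynomial_fun p -> polynomial_fun (fun x => c * p x)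
| polynomial_mul_id p : polynomial_fun p -> polynomial_fun (fun x => x * p x).

Lemma polynomial_fun_ext p q : polynomial_fun p -> (forall x, p x = q x) -> polynomial_fun q.
Proof. intros Hp E. replace q with p by (apply functional_extensionality; exact E). exact Hp. Qed.

Lemma polynomial_fun_continuous p : polynomial_fun p -> forall x, continuous p x.
Proof. induction 1; intros x; auto_cont; auto. Qed.

Lemma sin_average_polynomial p : polynomial_fun p -> sin_average p = RInt p 0 1.
Proof.
  intros Hp.
  assert (Hcont : forall p m, polynomial_fun p -> forall z, continuous (fun x => x ^ m * p x) z)
    by (intros; auto_cont; apply polynomial_fun_continuous; auto).
  assert (Hex : forall p m, polynomial_fun p -> ex_RInt (fun x => x ^ m * p x) 0 1)
    by (intros; apply ex_RInt_of_continuous; auto).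
  enough (Hm : forall m, sin_average (fun x => x ^ m * p x) = RInt (fun x => x ^ m * p x) 0 1).
  { specialize (Hm 0%nat). simpl pow in Hm.
    rewrite (sin_average_ext _ p), (RInt_ext_R _ p) in Hm by (intros; ring). exact Hm. }
  induction Hp as [c | p q Hp IHp Hq IHq | c p Hp IHp | p Hp IHp]; intros m; cbv beta.
  - rewrite (sin_average_ext _ (fun x => c * x ^ m)), sin_average_scal, sin_average_pow
      by (intros; auto_cont || ring).
    rewrite (RInt_ext_R (fun x => x ^ m * c) (fun x => c * x ^ m)), RInt_scal_R
      by (intros; ring || (apply ex_RInt_of_continuous; intros; auto_cont)).
    reflexivity.
  - rewrite (sin_average_ext _ (fun x => x ^ m * p x + x ^ m * q x)), sin_average_plus, IHp, IHq
      by (intros; auto || ring).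
    rewrite (RInt_ext_R (fun x => x ^ m * (p x + q x)) (fun x => x ^ m * p x + x ^ m * q x)),
      RInt_plus_R by (intros; auto || ring).
    reflexivity.
  - rewrite (sin_average_ext _ (fun x => c * (x ^ m * p x))), sin_average_scal, IHp
      by (intros; auto || ring).
    rewrite (RInt_ext_R (fun x => x ^ m * (c * p x)) (fun x => c * (x ^ m * p x))), RInt_scal_R
      by (intros; auto || ring).
    reflexivity.
  - rewrite (sin_average_ext _ (fun x => x ^ S m * p x)), IHp by (intros; simpl; ring).
    apply RInt_ext_R. intros; simpl; ring.
Qed.

(** * Bernstein approximation *)

(* [bernstein n k x = C(n, k) x^k (1 - x)^(n - k)], generated by Pascal's rule. *)
Fixpoint bernstein (n k : nat) (x : R) : R :=
  match n, k with
  | O, O => 1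
  | O, S _ => 0
  | S n', O => (1 - x) * bernstein n' O x
  | S n', S k' => (1 - x) * bernstein n' (S k') x + x * bernstein n' k' x
  end.

Lemma bernstein_polynomial n k : polynomial_fun (bernstein n k).
Proof.
  revert k. induction n as [| n IH]; intros [| k]; simpl; try apply polynomial_const.
  - apply polynomial_fun_ext with (fun x => bernstein n 0 x + -1 * (x * bernstein n 0 x));
      [| intros; ring].
    apply polynomial_plus; [| apply polynomial_scal, polynomial_mul_id]; apply IH.
  - apply polynomial_fun_ext
      with (fun x => (bernstein n (S k) x + -1 * (x * bernstein n (S k) x)) + x * bernstein n k x);
      [| intros; ring].
    repeat apply polynomial_plus; try apply polynomial_scal; try apply polynomial_mul_id; apply IH.
Qed.

Lemma bernstein_gt n k x : (n < k)%nat -> bernstein n k x = 0.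
Proof.
  revert k. induction n as [| n IH]; intros [| k] Hk; try lia; simpl; [reflexivity |].
  rewrite !IH by lia. ring.
Qed.

Lemma bernstein_nonneg n k x : 0 <= x <= 1 -> 0 <= bernstein n k x.
Proof.
  intros Hx. revert k. induction n as [| n IH]; intros [| k]; simpl; try lra.
  - pose proof (IH 0%nat). nra.
  - pose proof (IH (S k)). pose proof (IH k). nra.
Qed.

Definition bernstein_sum (n : nat) (h : nat -> R) (x : R) : R :=
  sum_f_R0 (fun k => h k * bernstein n k x) n.

Lemma bernstein_sum_ext n h1 h2 x :
  (forall k, h1 k = h2 k) -> bernstein_sum n h1 x = bernstein_sum n h2 x.
Proof. intros E. apply sum_eq. intros. now rewrite E. Qed.

Lemma bernstein_sum_plus n h1 h2 x :
  bernstein_sum n (fun k => h1 k + h2 k) x = bernstein_sum n h1 x + bernstein_sum n h2 x.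
Proof. unfold bernstein_sum. rewrite <- sum_plus. apply sum_eq. intros; ring. Qed.

Lemma bernstein_sum_scal n c h x :
  bernstein_sum n (fun k => c * h k) x = c * bernstein_sum n h x.
Proof.
  unfold bernstein_sum. rewrite scal_sum. apply sum_eq. intros; ring.
Qed.

Lemma bernstein_sum_S n h x :
  bernstein_sum (S n) h x
    = (1 - x) * bernstein_sum n h x + x * bernstein_sum n (fun k => h (S k)) x.
Proof.
  unfold bernstein_sum.
  rewrite decomp_sum by lia. simpl Init.Nat.pred. simpl bernstein.
  assert (Hshift : sum_f_R0 (fun k => h k * bernstein n k x) (S n)
                   = h 0%nat * bernstein n 0 x
                     + sum_f_R0 (fun i => h (S i) * bernstein n (S i) x) n)
    by (rewrite decomp_sum by lia; reflexivity).
  rewrite tech5, (bernstein_gt n (S n)), Rmult_0_r, Rplus_0_r in Hshift by lia.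
  rewrite Hshift, (sum_eq _ (fun i => h (S i) * bernstein n (S i) x * (1 - x)
                                   + h (S i) * bernstein n i x * x)) by (intros; ring).
  rewrite sum_plus, <- !scal_sum. ring.
Qed.

Lemma bernstein_sum_0 h x : bernstein_sum 0 h x = h 0%nat.
Proof. unfold bernstein_sum. simpl. ring. Qed.

Lemma bernstein_moment0 n x : bernstein_sum n (fun _ => 1) x = 1.
Proof.
  induction n as [| n IH]; [now rewrite bernstein_sum_0 |].
  rewrite bernstein_sum_S, IH. ring.
Qed.

Lemma bernstein_moment1 n x : bernstein_sum n INR x = INR n * x.
Proof.
  induction n as [| n IH]; [rewrite bernstein_sum_0; simpl; ring |].
  rewrite bernstein_sum_S, IH, (bernstein_sum_ext _ _ (fun k => INR k + 1))
    by (intros; apply S_INR).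
  rewrite bernstein_sum_plus, IH, bernstein_moment0, S_INR. ring.
Qed.

Lemma bernstein_moment2 n x :
  bernstein_sum n (fun k => INR k ^ 2) x = INR n * (INR n - 1) * x ^ 2 + INR n * x.
Proof.
  induction n as [| n IH]; [rewrite bernstein_sum_0; simpl; ring |].
  rewrite bernstein_sum_S, IH,
    (bernstein_sum_ext _ _ (fun k => INR k ^ 2 + (2 * INR k + 1))) by (intros; rewrite S_INR; ring).
  rewrite bernstein_sum_plus, IH, bernstein_sum_plus, bernstein_sum_scal,
    bernstein_moment1, bernstein_moment0, S_INR.
  ring.
Qed.

Lemma bernstein_variance n x : (0 < n)%nat ->
  bernstein_sum n (fun k => (INR k / INR n - x) ^ 2) x = x * (1 - x) / INR n.
Proof.
  intros Hn. assert (0 < INR n) by (apply lt_0_INR; auto).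
  rewrite (bernstein_sum_ext _ _ (fun k => / INR n ^ 2 * INR k ^ 2
                                          + ((- 2 * x / INR n) * INR k + x ^ 2 * 1)))
    by (intros; field; lra).
  rewrite !bernstein_sum_plus, !bernstein_sum_scal, bernstein_moment2, bernstein_moment1,
    bernstein_moment0.
  field. lra.
Qed.

Definition bernstein_approx (g : R -> R) (n : nat) (x : R) : R :=
  bernstein_sum n (fun k => g (INR k / INR n)) x.

Lemma bernstein_approx_polynomial g n : polynomial_fun (bernstein_approx g n).
Proof.
  unfold bernstein_approx, bernstein_sum.
  enough (H : forall N,
             polynomial_fun (fun x => sum_f_R0 (fun k => g (INR k / INR n) * bernstein n k x) N))
    by apply H.
  induction N as [| N IH]; simpl.
  - apply polynomial_scal, bernstein_polynomial.
  - apply polynomial_plus; [exact IH | apply polynomial_scal, bernstein_polynomial].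
Qed.

Lemma continuous_quadratic_majorant (g : R -> R) eps :
  (forall z, 0 <= z <= 1 -> continuity_pt g z) -> 0 < eps ->
  exists C, 0 <= C /\ forall z x, 0 <= z <= 1 -> 0 <= x <= 1 ->
    Rabs (g z - g x) <= eps + C * (z - x) ^ 2.
Proof.
  intros Hg Heps.
  destruct (continuity_ab_maj (fun z => Rabs (g z)) 0 1 ltac:(lra)) as [zM [HM _]].
  { intros z Hz. apply (continuity_pt_comp g Rabs); [apply Hg; auto | apply Rcontinuity_abs]. }
  destruct (Heine_cor2 Hg (mkposreal eps Heps)) as [delta Hdelta]. simpl in Hdelta.
  pose proof (cond_pos delta) as Hdelta_pos. pose proof (Rabs_pos (g zM)).
  exists (2 * Rabs (g zM) / (delta * delta)). split.
  { apply Rmult_le_pos; [lra | left; apply Rinv_0_lt_compat; nra]. }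
  intros z x Hz Hx. pose proof (pow2_ge_0 (z - x)).
  destruct (Rlt_or_le (Rabs (z - x)) delta) as [Hnear | Hfar].
  - pose proof (Hdelta z x Hz Hx Hnear).
    assert (0 <= 2 * Rabs (g zM) / (delta * delta) * (z - x) ^ 2).
    { apply Rmult_le_pos; [| lra]. apply Rmult_le_pos; [lra | left; apply Rinv_0_lt_compat; nra]. }
    lra.
  - assert (Hsq : delta * delta <= (z - x) ^ 2).
    { rewrite <- pow2_abs. pose proof (Rabs_pos (z - x)). nra. }
    assert (2 * Rabs (g zM) <= 2 * Rabs (g zM) / (delta * delta) * (z - x) ^ 2).
    { apply Rmult_le_reg_r with (delta * delta); [nra |].
      replace (2 * Rabs (g zM) / (delta * delta) * (z - x) ^ 2 * (delta * delta))
        with (2 * Rabs (g zM) * (z - x) ^ 2) by (field; lra).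
      nra. }
    pose proof (HM z Hz). pose proof (HM x Hx). pose proof (Rabs_triang (g z) (- g x)).
    rewrite Rabs_Ropp in *. unfold Rminus. lra.
Qed.

Theorem bernstein_approx_uniform (g : R -> R) :
  (forall z, 0 <= z <= 1 -> continuity_pt g z) ->
  forall eps, 0 < eps ->
  exists n, forall x, 0 <= x <= 1 -> Rabs (bernstein_approx g n x - g x) <= 2 * eps.
Proof.
  intros Hg eps Heps.
  destruct (continuous_quadratic_majorant g eps Hg Heps) as [C [HC Hmaj]].
  destruct (INR_archimed eps C Heps) as [n Hn].
  assert (Hn0 : (0 < n)%nat) by (destruct n; [simpl in Hn; lra | lia]).
  assert (HnR : 0 < INR n) by (apply lt_0_INR; auto).
  exists n. intros x Hx.
  replace (bernstein_approx g n x - g x)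
    with (bernstein_sum n (fun k => g (INR k / INR n) - g x) x).
  2:{ rewrite (bernstein_sum_ext n _ (fun k => g (INR k / INR n) + - g x * 1)) by (intros; ring).
      rewrite bernstein_sum_plus, bernstein_sum_scal, bernstein_moment0.
      unfold bernstein_approx. ring. }
  eapply Rle_trans; [apply sum_f_R0_triangle |].
  apply Rle_trans with (bernstein_sum n (fun k => eps * 1 + C * (INR k / INR n - x) ^ 2) x).
  - apply sum_Rle. intros k Hk.
    rewrite Rabs_mult, (Rabs_pos_eq (bernstein n k x)) by (apply bernstein_nonneg; auto).
    apply Rmult_le_compat_r; [apply bernstein_nonneg; auto |].
    rewrite Rmult_1_r. apply Hmaj; [| exact Hx].
    split; [apply Rmult_le_pos; [apply pos_INR | left; apply Rinv_0_lt_compat; auto] |].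
    apply Rmult_le_reg_r with (INR n); [exact HnR |].
    field_simplify; [apply le_INR; auto | lra].
  - rewrite bernstein_sum_plus, !bernstein_sum_scal, bernstein_moment0, bernstein_variance by auto.
    assert (C * (x * (1 - x) / INR n) <= C / INR n).
    { unfold Rdiv. rewrite <- Rmult_assoc.
      apply Rmult_le_compat_r; [left; apply Rinv_0_lt_compat; auto |]. nra. }
    assert (C / INR n < eps).
    { apply Rmult_lt_reg_r with (INR n); [exact HnR |]. field_simplify; lra. }
    lra.
Qed.

Lemma Rabs_le_eps_eq x y : (forall eps, 0 < eps -> Rabs (x - y) <= eps) -> x = y.
Proof.
  intros H. destruct (Req_dec (x - y) 0) as [E | Hne]; [lra | exfalso].
  pose proof (Rabs_pos_lt _ Hne). specialize (H (Rabs (x - y) / 2) ltac:(lra)). lra.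
Qed.

(* That is, [sin a sin (PI t)] is uniformly distributed on [[0, 1]] under
   [sin a da dt].  Lacking Fubini for Riemann integrals, this is checked on
   monomials by Wallis' formula and extended by Bernstein approximation. *)
Theorem sin_average_RInt (G : R -> R) :
  (forall z, -1 <= z <= 1 -> continuous G z) -> sin_average G = RInt G 0 1.
Proof.
  intros HG. apply Rabs_le_eps_eq. intros eps Heps.
  destruct (bernstein_approx_uniform G) with (eps / 4) as [n Hn]; [| lra |].
  { intros z Hz. apply continuity_pt_filterlim, HG. lra. }
  set (p := bernstein_approx G n).
  assert (Hp : polynomial_fun p) by apply bernstein_approx_polynomial.
  assert (Hpc : forall z, continuous p z) by (apply polynomial_fun_continuous, Hp).
  assert (Hmc : forall z, continuous (fun z => -1 * p z) z)
    by (intros; apply (continuous_mult (fun _ => -1) p); [apply continuous_const | apply Hpc]).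
  assert (Hdc : forall z, -1 <= z <= 1 -> continuous (fun z => G z + -1 * p z) z)
    by (intros; apply (continuous_plus G); auto).
  assert (Hd : forall z, 0 <= z <= 1 -> Rabs (G z + -1 * p z) <= 2 * (eps / 4)).
  { intros z Hz. replace (G z + -1 * p z) with (- (p z - G z)) by ring.
    rewrite Rabs_Ropp. apply Hn, Hz. }
  pose proof (sin_average_bound _ Hdc _ Hd) as Havg.
  assert (Hint : Rabs (RInt (fun z => G z + -1 * p z) 0 1) <= (1 - 0) * (2 * (eps / 4))).
  { apply abs_RInt_le_const; [lra | | exact Hd].
    apply ex_RInt_continuous_on; [lra | intros; apply Hdc; lra]. }
  assert (HpI : ex_RInt p 0 1) by (apply ex_RInt_of_continuous, Hpc).
  assert (HGI : ex_RInt G 0 1) by (apply ex_RInt_continuous_on; [lra | intros; apply HG; lra]).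
  rewrite sin_average_plus, sin_average_scal, (sin_average_polynomial p) in Havg
    by (exact Hp || (intros; apply Hpc) || (intros; apply Hmc) || exact HG).
  rewrite RInt_plus_R, RInt_scal_R in Hint
    by (exact HGI || exact HpI || apply ex_RInt_of_continuous, Hmc).
  replace (sin_average G - RInt G 0 1)
    with ((sin_average G + -1 * RInt p 0 1) - (RInt G 0 1 + -1 * RInt p 0 1)) by ring.
  eapply Rle_trans; [apply Rabs_triang |]. rewrite Rabs_Ropp. lra.
Qed.

(** * Great circles and horizontal loops *)

(* Mercator coordinates of [(cos θ, k sin θ, q sin θ)], [θ = PI t],
   [k = sqrt (1 - q^2)]: half of a great circle from [(1, 0, 0)] to its
   antipode.  The longitude [atan (k tan θ)] is written as [θ + atan (..)] so as
   to stay smooth across [θ = PI / 2]. *)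
Definition great_circle_x (q t : R) : R :=
  PI * t + atan ((sqrt (1 - q ^ 2) - 1) * sin (PI * t) * cos (PI * t)
                 / (cos (PI * t) ^ 2 + sqrt (1 - q ^ 2) * sin (PI * t) ^ 2)).

Definition great_circle_y (q t : R) : R := artanh (q * sin (PI * t)).

Lemma great_circle_den_pos q t : 0 <= q < 1 -> 0 < 1 - q ^ 2 * sin (PI * t) ^ 2.
Proof.
  intros Hq. pose proof (SIN_bound (PI * t)).
  assert (sin (PI * t) ^ 2 <= 1) by (simpl; nra). assert (q ^ 2 < 1) by (simpl; nra). nra.
Qed.

Lemma is_derive_great_circle_x q t : 0 <= q < 1 ->
  is_derive (great_circle_x q) t (PI * sqrt (1 - q ^ 2) / (1 - q ^ 2 * sin (PI * t) ^ 2)).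
Proof.
  intros Hq. pose proof PI_RGT_0. pose proof (great_circle_den_pos q t Hq) as HD.
  set (k := sqrt (1 - q ^ 2)).
  assert (Hk : k ^ 2 = 1 - q ^ 2) by (unfold k; rewrite pow2_sqrt; simpl; nra).
  assert (Hk0 : 0 < k) by (unfold k; apply sqrt_lt_R0; simpl; nra).
  pose proof (sin2_cos2 (PI * t)) as Hsc. unfold Rsqr in Hsc.
  set (s := sin (PI * t)) in *. set (c := cos (PI * t)) in *.
  assert (HM : 0 < c ^ 2 + k * s ^ 2).
  { destruct (Req_dec s 0) as [Hs | Hs]; [rewrite Hs in *; simpl; nra |].
    assert (0 < s ^ 2) by (simpl; nra). pose proof (pow2_ge_0 c). nra. }
  unfold great_circle_x. fold k.
  evar_last; [auto_derive; [fold s c; simpl in HM; lra | reflexivity] |]. fold s c.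
  transitivity (PI * k * (c * c + s * s) / (c * c + k ^ 2 * s * s)).
  - assert (0 < c * c + k ^ 2 * s * s) by (simpl in *; nra).
    pose proof (pow2_ge_0 ((k - 1) * s * c)). simpl in *.
    field. repeat split; nra.
  - rewrite Rplus_comm in Hsc. rewrite Hsc, Hk. replace (c * c) with (1 - s * s) by lra.
    field. simpl in *. nra.
Qed.

Lemma is_derive_great_circle_y q t : 0 <= q < 1 ->
  is_derive (great_circle_y q) t (PI * q * cos (PI * t) / (1 - q ^ 2 * sin (PI * t) ^ 2)).
Proof.
  intros Hq. pose proof (SIN_bound (PI * t)). pose proof (great_circle_den_pos q t Hq).
  assert (q * sin (PI * t) < 1) by nra. assert (-1 < q * sin (PI * t)) by nra.
  unfold great_circle_y, artanh.
  evar_last; [auto_derive; [repeat split; try lra; apply Rdiv_lt_0_compat; lra | reflexivity] |].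
  field. split; [nra | lra].
Qed.

Lemma Derive_great_circle_x q : 0 <= q < 1 ->
  Derive (great_circle_x q) = fun t => PI * sqrt (1 - q ^ 2) / (1 - q ^ 2 * sin (PI * t) ^ 2).
Proof.
  intros. apply functional_extensionality. intros t.
  apply is_derive_unique, is_derive_great_circle_x; auto.
Qed.

Lemma Derive_great_circle_y q : 0 <= q < 1 ->
  Derive (great_circle_y q) = fun t => PI * q * cos (PI * t) / (1 - q ^ 2 * sin (PI * t) ^ 2).
Proof.
  intros. apply functional_extensionality. intros t.
  apply is_derive_unique, is_derive_great_circle_y; auto.
Qed.

Lemma great_circle_loop beta b q : 0 < b <= beta -> 0 <= q <= tanh b ->
  noncontractible_loop_lift beta (great_circle_x q) (great_circle_y q).
Proof.
  intros Hb Hq. pose proof (tanh_bound b). assert (Hq1 : 0 <= q < 1) by lra.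
  split; [split; [| split] |].
  - intros t _. split; eexists; [apply is_derive_great_circle_x | apply is_derive_great_circle_y];
      auto.
  - intros t _. rewrite Derive_great_circle_x, Derive_great_circle_y by auto.
    pose proof (great_circle_den_pos q t Hq1). split; auto_cont; lra.
  - intros t _. unfold great_circle_y.
    assert (Rabs (q * sin (PI * t)) <= tanh b).
    { rewrite Rabs_mult, Rabs_pos_eq by lra. pose proof (SIN_bound (PI * t)).
      assert (Rabs (sin (PI * t)) <= 1) by (apply Rabs_le; lra). nra. }
    pose proof (artanh_bound _ _ H0). lra.
  - exists 1%Z. split; [lia |]. unfold Apow, great_circle_x, great_circle_y, artanh. simpl.
    rewrite !Rmult_0_r, !Rmult_1_r, sin_0, sin_PI, !Rmult_0_r, !Rmult_0_l, Rplus_0_r.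
    rewrite !Rdiv_0_l, atan_0, !Rplus_0_r, Rminus_0_r, Rdiv_1_r, ln_1, Rdiv_0_l. f_equal; ring.
Qed.

Lemma great_circle_speed q t : 0 <= q < 1 ->
  sqrt (Derive (great_circle_x q) t ^ 2 + Derive (great_circle_y q) t ^ 2)
    = PI / sqrt (1 - (q * sin (PI * t)) ^ 2).
Proof.
  intros Hq. pose proof PI_RGT_0. pose proof (great_circle_den_pos q t Hq) as HD.
  rewrite Derive_great_circle_x, Derive_great_circle_y by exact Hq.
  replace ((q * sin (PI * t)) ^ 2) with (q ^ 2 * sin (PI * t) ^ 2) by ring.
  set (D := 1 - q ^ 2 * sin (PI * t) ^ 2) in *.
  assert (Hs : 0 < sqrt D) by (apply sqrt_lt_R0; lra).
  rewrite <- (sqrt_pow2 (PI / sqrt D)) by (apply Rlt_le, Rdiv_lt_0_compat; lra).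
  f_equal.
  replace ((PI / sqrt D) ^ 2) with (PI ^ 2 / (sqrt D * sqrt D)) by (field; lra).
  rewrite sqrt_sqrt by lra.
  replace ((PI * sqrt (1 - q ^ 2) / D) ^ 2) with (PI ^ 2 * sqrt (1 - q ^ 2) ^ 2 / D ^ 2)
    by (field; lra).
  rewrite pow2_sqrt by (simpl; nra).
  pose proof (sin2_cos2 (PI * t)) as Hsc. unfold Rsqr in Hsc.
  replace ((PI * q * cos (PI * t) / D) ^ 2) with (PI ^ 2 * q ^ 2 * cos (PI * t) ^ 2 / D ^ 2)
    by (field; lra).
  replace (cos (PI * t) ^ 2) with (1 - sin (PI * t) ^ 2) by (simpl; lra).
  apply Rmult_eq_reg_r with (D ^ 2); [| simpl; nra].
  field_simplify; [| lra | lra]. unfold D. ring.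
Qed.

Lemma horizontal_loop beta y0 : - beta <= y0 <= beta ->
  noncontractible_loop_lift beta (fun t => 2 * PI * t) (fun _ => y0).
Proof.
  intros Hy. split; [split; [| split] |].
  - intros; split; auto_derive; auto.
  - intros t _.
    split; [apply (continuous_ext (fun _ => 2 * PI * 1)) | apply (continuous_ext (fun _ => 0))];
      try apply continuous_const; intros; symmetry;
      [rewrite Derive_scal, Derive_id | rewrite Derive_const]; reflexivity.
  - intros; auto.
  - exists 2%Z. split; [lia |]. unfold Apow. simpl. f_equal; ring.
Qed.

Lemma horizontal_loop_length (psi : R -> R -> R) y0 :
  (forall x, psi x y0 = psi 0 y0) ->
  curve_length psi (fun t => 2 * PI * t) (fun _ => y0) = 2 * PI * psi 0 y0.
Proof.
  intros Hpsi. pose proof PI_RGT_0. unfold curve_length.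
  rewrite (RInt_ext_R _ (fun _ => 2 * PI * psi 0 y0)), RInt_const_R; [ring |].
  intros t _.
  rewrite Derive_scal, Derive_id, Derive_const, Hpsi.
  replace ((2 * PI * 1) ^ 2 + 0 ^ 2) with ((2 * PI) ^ 2) by ring.
  rewrite sqrt_pow2 by lra. ring.
Qed.

(** * The systole of a metric depending on [y] only *)

Section ProfileMetric.

Variables (beta : R) (phi : R -> R -> R) (f : R -> R).
Hypothesis beta_pos : 0 < beta.
Hypothesis f_continuous : forall y, continuous f y.
Hypothesis phi_profile : forall x y, - beta <= y <= beta -> phi x y = f y.

(* The length density of the great circle curves in the height coordinate
   [u = tanh y]. *)
Definition great_circle_density (u : R) : R := f (artanh u) / sqrt (1 - u ^ 2).

Lemma continuous_great_circle_density u : -1 < u < 1 -> continuous great_circle_density u.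
Proof.
  intros Hu. unfold great_circle_density.
  assert (0 < sqrt (1 - u ^ 2)) by (apply sqrt_lt_R0; simpl; nra).
  apply (continuous_mult (fun u => f (artanh u))); [| auto_cont; lra].
  apply (continuous_comp artanh f); [| apply f_continuous].
  unfold artanh. auto_cont; try lra. apply Rdiv_lt_0_compat; lra.
Qed.

Lemma great_circle_length b q : 0 < b <= beta -> 0 <= q <= tanh b ->
  curve_length phi (great_circle_x q) (great_circle_y q)
    = PI * RInt (fun t => great_circle_density (q * sin (PI * t))) 0 1.
Proof.
  intros Hb Hq. pose proof (tanh_bound b). assert (Hq1 : 0 <= q < 1) by lra.
  pose proof (great_circle_loop beta b q Hb Hq) as [[_ [_ Hstrip]] _].
  unfold curve_length. rewrite <- RInt_scal_R.
  2:{ apply ex_RInt_continuous_on; [lra |]. intros t Ht.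
      apply (continuous_comp (fun t => q * sin (PI * t)) great_circle_density); [auto_cont |].
      apply continuous_great_circle_density. pose proof (SIN_bound (PI * t)). split; nra. }
  apply RInt_ext_R. intros t Ht. rewrite Rmin_left, Rmax_right in Ht by lra.
  rewrite phi_profile, great_circle_speed by (auto; apply Hstrip; lra).
  pose proof (great_circle_den_pos q t Hq1).
  assert (0 < sqrt (1 - (q * sin (PI * t)) ^ 2))
    by (apply sqrt_lt_R0; rewrite Rpow_mult_distr; lra).
  unfold great_circle_density, great_circle_y. field. lra.
Qed.

Lemma RInt_great_circle_density b :
  RInt great_circle_density 0 (tanh b) = RInt (fun y => f y * phi0 y) 0 b.
Proof.
  rewrite <- tanh_0 at 1. rewrite <- (RInt_comp great_circle_density tanh (fun y => phi0 y ^ 2)).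
  - apply RInt_ext_R. intros y _. unfold great_circle_density.
    rewrite artanh_tanh. pose proof (phi0_sqr_add_tanh_sqr y). pose proof (phi0_pos y).
    replace (1 - tanh y ^ 2) with (phi0 y ^ 2) by lra. rewrite sqrt_pow2 by lra.
    unfold scal; simpl; unfold mult; simpl. field. lra.
  - intros y _. apply continuous_great_circle_density, tanh_bound.
  - intros y _. split; [apply is_derive_tanh | auto_cont].
Qed.

Variable r : R.
Hypothesis r_le_length :
  forall g1 g2, noncontractible_loop_lift beta g1 g2 -> r <= curve_length phi g1 g2.

(* Average the lengths of the tilted great circles [q = tanh b * sin a]
   with weight [sin a]. *)
Lemma great_circle_average_bound b : 0 < b <= beta ->
  r * tanh b <= PI * RInt (fun y => f y * phi0 y) 0 b.
Proof.
  intros Hb. pose proof PI_RGT_0.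
  set (s0 := tanh b).
  assert (Hs0 : 0 < s0 < 1) by (split; [apply tanh_pos; lra | apply tanh_bound]).
  set (G := fun z => great_circle_density (s0 * z)).
  assert (HG : forall z, -1 <= z <= 1 -> continuous G z).
  { intros z Hz. apply (continuous_comp (fun z => s0 * z) great_circle_density); [auto_cont |].
    apply continuous_great_circle_density. split; nra. }
  assert (Havg : r / PI <= sin_average G).
  { apply sin_average_ge; [exact HG |]. intros a Ha.
    assert (Hsa : 0 <= sin a <= 1) by (split; [apply sin_ge_0; lra | apply SIN_bound]).
    assert (Hq : 0 <= s0 * sin a <= tanh b) by (fold s0; split; nra).
    pose proof (r_le_length _ _ (great_circle_loop beta b _ Hb Hq)) as Hr.
    rewrite (great_circle_length b) in Hr by assumption.
    apply Rmult_le_reg_l with PI; [lra |].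
    replace (PI * (r / PI)) with r by (field; lra).
    unfold G. rewrite (RInt_ext_R _ (fun t => great_circle_density (s0 * sin a * sin (PI * t))));
      [exact Hr | intros; now rewrite Rmult_assoc]. }
  rewrite sin_average_RInt in Havg by exact HG.
  assert (Hlin : s0 * RInt G 0 1 = RInt great_circle_density 0 s0).
  { assert (Hex : ex_RInt great_circle_density (s0 * 0 + 0) (s0 * 1 + 0)).
    { apply ex_RInt_continuous_on; [lra |]. intros; apply continuous_great_circle_density. lra. }
    pose proof (RInt_comp_lin great_circle_density s0 0 0 1 Hex) as Hl.
    rewrite Rmult_0_r, Rmult_1_r, !Rplus_0_r in Hl.
    rewrite <- Hl, <- RInt_scal_R by (apply ex_RInt_continuous_on; [lra | intros; apply HG; lra]).
    apply RInt_ext_R. intros; unfold G; now rewrite Rplus_0_r. }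
  fold s0. rewrite <- RInt_great_circle_density. fold s0. rewrite <- Hlin.
  replace (r * s0) with (PI * s0 * (r / PI)) by (field; lra).
  replace (PI * (s0 * RInt G 0 1)) with (PI * s0 * RInt G 0 1) by ring.
  apply Rmult_le_compat_l; [nra | exact Havg].
Qed.

Lemma horizontal_bound y : - beta <= y <= beta -> r <= 2 * PI * f y.
Proof.
  intros Hy. rewrite <- (phi_profile 0 y Hy), <- horizontal_loop_length.
  - apply r_le_length, horizontal_loop, Hy.
  - intros x. rewrite !phi_profile by exact Hy. reflexivity.
Qed.

Hypothesis f_even : forall y, - beta <= y <= beta -> f (- y) = f y.

Lemma systole_upper_bound :
  r * RInt (fun y => phib 0 y * phib 0 y) (- beta) beta
    <= PI * RInt (fun y => f y * phib 0 y) (- beta) beta.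
Proof.
  pose proof PI_RGT_0. pose proof beta1_pos.
  set (b := Rmin beta beta1).
  assert (Hb : 0 < b <= beta) by (split; [apply Rmin_glb_lt | apply Rmin_l]; lra).
  assert (Hb1 : b <= beta1) by apply Rmin_r.
  assert (Hpp : forall y, continuous (fun y => phib 0 y * phib 0 y) y)
    by (intros; apply (continuous_mult (phib 0)); apply continuous_phib).
  assert (Hfp : forall y, continuous (fun y => f y * phib 0 y) y)
    by (intros; apply (continuous_mult f); [apply f_continuous | apply continuous_phib]).
  rewrite !RInt_even by (auto; intros; unfold phib; rewrite ?f_even, phi0_opp; auto).
  rewrite <- (RInt_Chasles _ 0 b beta), <- (RInt_Chasles (fun y => f y * phib 0 y) 0 b beta)
    by (apply ex_RInt_of_continuous; auto).
  change plus with Rplus.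
  assert (Hinner : r * RInt (fun y => phib 0 y * phib 0 y) 0 b
                   <= PI * RInt (fun y => f y * phib 0 y) 0 b).
  { rewrite (RInt_ext_R (fun y => phib 0 y * phib 0 y) (fun y => phi0 y ^ 2)),
      (RInt_ext_R (fun y => f y * phib 0 y) (fun y => f y * phi0 y));
      try (intros y Hy; rewrite Rmin_left, Rmax_right in Hy by lra;
           rewrite phib_eq_phi0 by lra; ring).
    rewrite (RInt_is_derive tanh (fun y => phi0 y ^ 2));
      [| intros; apply is_derive_tanh | intros; auto_cont].
    rewrite tanh_0, Rminus_0_r. apply great_circle_average_bound, Hb. }
  assert (Houter : r * RInt (fun y => phib 0 y * phib 0 y) b beta
                   <= PI * RInt (fun y => f y * phib 0 y) b beta).
  { rewrite <- !RInt_scal_R by (apply ex_RInt_of_continuous; auto).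
    apply RInt_le; [lra | | |].
    { apply ex_RInt_of_continuous. intros.
      apply (continuous_mult (fun _ => r)); [apply continuous_const | auto]. }
    { apply ex_RInt_of_continuous. intros.
      apply (continuous_mult (fun _ => PI)); [apply continuous_const | auto]. }
    intros y Hy. assert (beta1 <= y) by (unfold b in Hy; destruct (Rle_dec beta beta1);
      [rewrite Rmin_left in Hy | rewrite Rmin_right in Hy]; lra).
    rewrite phib_eq_half by lra. pose proof (horizontal_bound y ltac:(lra)). lra. }
  lra.
Qed.

End ProfileMetric.

(** * Projection onto [phib] *)

Lemma L2ip_profile beta (F H : R -> R -> R) (F0 H0 : R -> R) : 0 < beta ->
  (forall x y, - beta <= y <= beta -> F x y = F0 y) ->
  (forall x y, - beta <= y <= beta -> H x y = H0 y) ->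
  L2ip beta F H = PI * RInt (fun y => F0 y * H0 y) (- beta) beta.
Proof.
  intros Hb HF HH. unfold L2ip.
  rewrite (RInt_ext_R _ (fun _ => RInt (fun y => F0 y * H0 y) (- beta) beta)), RInt_const_R;
    [ring |].
  intros x _. apply RInt_ext_R. intros y Hy. rewrite Rmin_left, Rmax_right in Hy by lra.
  rewrite HF, HH by lra. reflexivity.
Qed.

Lemma area_L2norm2 beta psi : area beta psi = L2norm2 beta psi.
Proof.
  unfold area, L2norm2, L2ip. apply RInt_ext_R. intros x _.
  apply RInt_ext_R. intros y _. ring.
Qed.

Lemma RInt_pythagoras (f p : R -> R) a b :
  ex_RInt (fun y => f y * f y) a b -> ex_RInt (fun y => f y * p y) a b ->
  ex_RInt (fun y => p y * p y) a b -> RInt (fun y => p y * p y) a b <> 0 ->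
  let c := RInt (fun y => f y * p y) a b / RInt (fun y => p y * p y) a b in
  RInt (fun y => f y * f y) a b
    = RInt (fun y => c * p y * (c * p y)) a b
      + RInt (fun y => (f y - c * p y) * (f y - c * p y)) a b.
Proof.
  intros Hff Hfp Hpp Hnz c.
  rewrite (RInt_ext_R (fun y => c * p y * (c * p y)) (fun y => (c * c) * (p y * p y)))
    by (intros; ring).
  rewrite (RInt_ext_R (fun y => (f y - c * p y) * (f y - c * p y))
             (fun y => f y * f y + ((-2 * c) * (f y * p y) + (c * c) * (p y * p y))))
    by (intros; ring).
  assert (Hsc : forall k g, ex_RInt g a b -> ex_RInt (fun y => k * g y) a b)
    by (intros k g Hg; exact (ex_RInt_scal (V := R_NormedModule) g a b k Hg)).
  assert (Hsum : ex_RInt (fun y => (-2 * c) * (f y * p y) + (c * c) * (p y * p y)) a b)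
    by (apply (ex_RInt_plus (V := R_NormedModule)); auto).
  rewrite RInt_plus_R, RInt_plus_R, !RInt_scal_R by auto.
  assert (Hc : c * RInt (fun y => p y * p y) a b = RInt (fun y => f y * p y) a b)
    by (unfold c; field; exact Hnz).
  (* [ring] would read the carrier of [RInt], not [R], off the left-hand side. *)
  rewrite <- Hc. apply Rminus_diag_uniq. ring.
Qed.

Lemma sys_ge_of_lower_bound beta psi r :
  (forall g1 g2, noncontractible_loop_lift beta g1 g2 -> r <= curve_length psi g1 g2) ->
  Rbar_le r (sys beta psi).
Proof. intros Hr. apply Glb_Rbar_correct. intros L [g1 [g2 [Hl ->]]]. now apply Hr. Qed.

Lemma sys_le_of_lower_bounds beta psi B :
  (forall r,
     (forall g1 g2, noncontractible_loop_lift beta g1 g2 -> r <= curve_length psi g1 g2) ->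
     r <= B) ->
  Rbar_le (sys beta psi) B.
Proof.
  intros HB.
  destruct (Glb_Rbar_correct (fun L => exists g1 g2, noncontractible_loop_lift beta g1 g2
                                                     /\ L = curve_length psi g1 g2)) as [Hlb _].
  fold (sys beta psi) in Hlb. destruct (sys beta psi) as [s | |]; simpl.
  - apply HB. intros g1 g2 Hl. apply (Hlb (curve_length psi g1 g2)). eauto.
  - specialize (HB (B + 1)). enough (B + 1 <= B) by lra. apply HB.
    intros g1 g2 Hl. exfalso. apply (Hlb (curve_length psi g1 g2)). eauto.
  - exact I.
Qed.

Lemma curve_length_ext (psi chi : R -> R -> R) g1 g2 :
  (forall x y, psi x y = chi x y) -> curve_length psi g1 g2 = curve_length chi g1 g2.
Proof. intros E. unfold curve_length. apply RInt_ext_R. intros. now rewrite E. Qed.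

Lemma curve_length_scal_phib beta c g1 g2 : noncontractible_loop_lift beta g1 g2 ->
  curve_length (fun x y => c * phib x y) g1 g2 = c * curve_length phib g1 g2.
Proof.
  intros [[Hd [Hc _]] _]. unfold curve_length.
  rewrite <- RInt_scal_R
    by apply (ex_RInt_length_integrand g1 g2 Hd Hc (phib 0)), continuous_phib.
  apply RInt_ext_R. intros; ring.
Qed.

Section ProjectionOfProfile.

Variables (beta : R) (phi : R -> R -> R) (f : R -> R).
Hypothesis beta_pos : 0 < beta.
Hypothesis f_continuous : forall y, continuous f y.
Hypothesis phi_profile : forall x y, - beta <= y <= beta -> phi x y = f y.
Hypothesis f_even : forall y, - beta <= y <= beta -> f (- y) = f y.
Hypothesis f_pos : forall y, - beta <= y <= beta -> 0 < f y.

Let Ifp := RInt (fun y => f y * phib 0 y) (- beta) beta.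
Let Ipp := RInt (fun y => phib 0 y * phib 0 y) (- beta) beta.

Lemma ex_RInt_strip (g : R -> R) : (forall y, continuous g y) -> ex_RInt g (- beta) beta.
Proof. intros; apply ex_RInt_of_continuous; auto. Qed.

Lemma Ipp_pos : 0 < Ipp.
Proof.
  apply Rlt_le_trans with (RInt (fun _ => 1 / 4) (- beta) beta); [rewrite RInt_const_R; lra |].
  apply RInt_le; [lra | apply ex_RInt_const | apply ex_RInt_strip; intros; auto_cont |].
  intros y _. unfold phib. pose proof (Rmax_r (phi0 y) (1 / 2)). nra.
Qed.

Lemma Ifp_nonneg : 0 <= Ifp.
Proof.
  apply Rle_trans with (RInt (fun _ => 0) (- beta) beta); [rewrite RInt_const_R; lra |].
  apply RInt_le; [lra | apply ex_RInt_const | apply ex_RInt_strip; intros; auto_cont; auto |].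
  intros y Hy. unfold phib. pose proof (Rmax_r (phi0 y) (1 / 2)). pose proof (f_pos y ltac:(lra)).
  nra.
Qed.

Lemma Pphib_profile x y : Pphib beta phi x y = Ifp / Ipp * phib 0 y.
Proof.
  pose proof PI_RGT_0. pose proof Ipp_pos. unfold Pphib. f_equal.
  rewrite (L2ip_profile _ _ _ f (phib 0)), (L2ip_profile _ _ _ (phib 0) (phib 0))
    by (intros; solve [auto | reflexivity]).
  fold Ifp Ipp. field. lra.
Qed.

Lemma area_projection_pythagoras :
  area beta phi
    = area beta (Pphib beta phi) + L2norm2 beta (fun x y => phi x y - Pphib beta phi x y).
Proof.
  pose proof Ipp_pos. set (c := Ifp / Ipp).
  rewrite !area_L2norm2. unfold L2norm2.
  rewrite (L2ip_profile _ _ _ f f),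
    (L2ip_profile _ _ _ (fun y => c * phib 0 y) (fun y => c * phib 0 y)),
    (L2ip_profile _ _ _ (fun y => f y - c * phib 0 y) (fun y => f y - c * phib 0 y))
    by (intros; rewrite ?Pphib_profile, ?phi_profile by auto; solve [auto | reflexivity]).
  rewrite (RInt_pythagoras f (phib 0)); try (apply ex_RInt_strip; intros; auto_cont; auto);
    fold Ifp Ipp c; [ring | lra].
Qed.

Lemma sys_le_sys_projection : Rbar_le (sys beta phi) (sys beta (Pphib beta phi)).
Proof.
  pose proof PI_RGT_0. pose proof Ipp_pos. pose proof Ifp_nonneg.
  apply Rbar_le_trans with (Ifp / Ipp * PI).
  - apply sys_le_of_lower_bounds. intros r Hr.
    pose proof (systole_upper_bound beta phi f beta_pos f_continuous phi_profile r Hr f_even)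
      as Hup.
    fold Ifp Ipp in Hup. apply Rmult_le_reg_r with Ipp; [lra |].
    replace (Ifp / Ipp * PI * Ipp) with (PI * Ifp) by (field; lra). exact Hup.
  - apply sys_ge_of_lower_bound. intros g1 g2 Hl.
    rewrite (curve_length_ext _ (fun x y => Ifp / Ipp * phib x y)) by apply Pphib_profile.
    rewrite (curve_length_scal_phib beta) by exact Hl.
    apply Rmult_le_compat_l; [apply Rdiv_le_0_compat; lra |].
    exact (phib_length_ge_PI beta g1 g2 Hl).
Qed.

End ProjectionOfProfile.

Theorem lemma1p2 (beta : R) (phi : R -> R -> R)
  (hbeta : 0 < beta)
  (hsmooth : smooth2 phi)
  (hpos : forall x y, - beta <= y <= beta -> 0 < phi x y)
  (hA : forall x y, - beta <= y <= beta -> phi (x + PI) (- y) = phi x y)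
  (hH : forall h x y, - beta <= y <= beta -> phi (x + h) y = phi x y) :
  area beta phi
    = area beta (Pphib beta phi)
      + L2norm2 beta (fun x y => phi x y - Pphib beta phi x y)
  /\ Rbar_le (sys beta phi) (sys beta (Pphib beta phi)).
Proof.
  set (f := fun y => phi 0 y).
  assert (Hprof : forall x y, - beta <= y <= beta -> phi x y = f y)
    by (intros x y Hy; unfold f; rewrite <- (hH x 0 y Hy); f_equal; ring).
  assert (Hcont : forall y, continuous f y)
    by (intros y; apply (continuous_comp_2 (fun _ => 0) (fun y => y) phi); auto_cont;
        apply (hsmooth 0%nat)).
  assert (Heven : forall y, - beta <= y <= beta -> f (- y) = f y)
    by (intros y Hy; unfold f at 2; rewrite <- (hA 0 y Hy), Hprof by lra; reflexivity).
  assert (Hfpos : forall y, - beta <= y <= beta -> 0 < f y) by (intros; apply hpos; auto).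
  split.
  - exact (area_projection_pythagoras beta phi f hbeta Hcont Hprof).
  - exact (sys_le_sys_projection beta phi f hbeta Hcont Hprof Heven Hfpos).
Qed.
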